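(* Let $\mathfrak{T}$ be a triangulation of the strip. Then $t=\Phi(\mathfrak{T})$ is well defined (independent of the choice of the arcs $(p^\circ,q_\circ),(r^\circ,s_\circ)$ in its definition), it is an $\mathrm{SL}_2$-tiling with enough ones, and for all $i,j\in\mathbb{Z}$ we have $t_{ij}=1$ if and only if $(i^\circ,j_\circ)\in\mathfrak{T}$.
   Context: Vertices of the strip: two disjoint copies of $\mathbb{Z}$, written $\mathbb{Z}^\circ=\{p^\circ: p\in\mathbb{Z}\}$ (upper edge) and $\mathbb{Z}_\circ=\{q_\circ : q\in\mathbb{Z}\}$ (lower edge). Geometrically, $p^\circ$ is the point $(-p,1)$ and $q_\circ$ is the point $(q,-1)$ of the strip $\mathbb{R}\times[-1,1]$. A connecting arc is a pair $(p^\circ,q_\circ)$ with $p,q\in\mathbb{Z}$; an internal arc is a pair $(p^\circ,q^\circ)$ or $(p_\circ,q_\circ)$ with $p\le q-2$. Two distinct arcs cross exactly in the following cases: connecting arcs $(p^\circ,q_\circ),(p'^\circ,q'_\circ)$ cross iff $(p-p')(q-q')>0$; internal arcs $(a^\circ,b^\circ),(c^\circ,d^\circ)$ cross iff $a<c<b<d$ or $c<a<d<b$ (same for lower internal arcs); $(a^\circ,b^\circ)$ crosses $(p^\circ,q_\circ)$ iff $a<p<b$, and $(a_\circ,b_\circ)$ crosses $(p^\circ,q_\circ)$ iff $a<q<b$; upper and lower internal arcs never cross. A triangulation of the strip is a maximal set $\mathfrak{T}$ of pairwise non-crossing arcs such that for every $(i,j)\in\mathbb{Z}^2$ there is $(p^\circ,q_\circ)\in\mathfrak{T}$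 with $p<i,\ q>j$, and there is $(p^\circ,q_\circ)\in\mathfrak{T}$ with $p>i,\ q<j$. An $\mathrm{SL}_2$-tiling is a map $t:\mathbb{Z}\times\mathbb{Z}\to\{1,2,3,\dots\}$, $(i,j)\mapsto t_{ij}$, with $t_{ij}t_{i+1,j+1}-t_{i,j+1}t_{i+1,j}=1$ for all $i,j$. It has enough ones if for every $(i,j)$ there is $(p,q)$ with $p<i,\ q>j$ and $t_{pq}=1$, and there is $(p,q)$ with $p>i,\ q<j$ and $t_{pq}=1$. Friese numbers of a triangulated polygon: for a convex polygon with vertices $v_0,\dots,v_n$ in cyclic order and a triangulation $\mathcal{X}$, let $a_l$ be the number of triangles incident with $v_l$; for fixed $k$ define $m_k(k)=0$, $m_k(k+1)=1$, $m_k(l+1)=a_lm_k(l)-m_k(l-1)$ (indices mod $n+1$, $l$ running from $k$ to $k+n$) and set $\mathcal{X}(v_k,v_l)=m_k(l)$. $\Phi(\mathfrak{T})$: for $(i,j)$ choose $(p^\circ,q_\circ),(r^\circ,s_\circ)\in\mathfrak{T}$ with $p<i<r$, $s<j<q$; let $P$ be the polygon with vertices in cyclic order $p^\circ,\dots,r^\circ,s_\circ,\dots,q_\circ$, and $\mathfrak{T}_P$ the triangulation of $P$ formed by the arcs of $\mathfrak{T}$ that are diagonals of $P$; set $\Phi(\mathfrak{T})_{ij}=\mathfrak{T}_P(i^\circ,j_\circ)$. *)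

From Stdlib Require Import ZArith List Lia Bool.
Import ListNotations.
Open Scope Z_scope.

(** Vertices of the strip: [U p] is p° = (-p,1), [L q] is q_∘ = (q,-1). *)
Inductive vtx : Type := U (p : Z) | L (q : Z).

(** Arcs: [Conn p q] = (p°, q_∘); [Up a b] = (a°, b°); [Low a b] = (a_∘, b_∘). *)
Inductive arc : Type := Conn (p q : Z) | Up (a b : Z) | Low (a b : Z).

Definition valid_arc (x : arc) : Prop :=
  match x with
  | Conn _ _ => True
  | Up a b => a <= b - 2
  | Low a b => a <= b - 2
  end.

Definition crosses (x y : arc) : Prop :=
  match x, y with
  | Conn p q, Conn p' q' => (p - p') * (q - q') > 0
  | Up a b, Up c d => (a < c < b /\ b < d) \/ (c < a < d /\ d < b)
  | Low a b, Low c d => (a < c < b /\ b < d) \/ (c < a < d /\ d < b)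
  | Up a b, Conn p _ => a < p < b
  | Conn p _, Up a b => a < p < b
  | Low a b, Conn _ q => a < q < b
  | Conn _ q, Low a b => a < q < b
  | _, _ => False
  end.

Definition arcset := arc -> bool.

Definition triangulation (T : arcset) : Prop :=
  (forall x, T x = true -> valid_arc x) /\
  (forall x y, T x = true -> T y = true -> x <> y -> ~ crosses x y) /\
  (forall x, valid_arc x -> T x = false -> exists y, T y = true /\ x <> y /\ crosses x y) /\
  (forall i j : Z,
      (exists p q, T (Conn p q) = true /\ p < i /\ q > j) /\
      (exists p q, T (Conn p q) = true /\ p > i /\ q < j)).

Definition SL2_tiling (t : Z -> Z -> Z) : Prop :=
  (forall i j, 1 <= t i j) /\
  (forall i j, t i j * t (i+1) (j+1) - t i (j+1) * t (i+1) j = 1).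

Definition enough_ones (t : Z -> Z -> Z) : Prop :=
  forall i j : Z,
    (exists p q, p < i /\ q > j /\ t p q = 1) /\
    (exists p q, p > i /\ q < j /\ t p q = 1).

(** The polygon has vertices v_0, ..., v_(N-1) (N = n+1); [E k l] says that
    v_k and v_l are joined by a side of the polygon or a diagonal of the
    triangulation. *)

Definition tri_count (N : nat) (E : nat -> nat -> bool) (l : nat) : nat :=
  length (filter (fun yz : nat * nat =>
            let (y, z) := yz in
            Nat.ltb y z && negb (Nat.eqb y l) && negb (Nat.eqb z l)
            && E l y && E l z && E y z)
          (list_prod (seq 0 N) (seq 0 N))).

(** Pairs (m_k(k+d), m_k(k+d+1)) with m_k(k)=0, m_k(k+1)=1,
    m_k(l+1) = a_l m_k(l) - m_k(l-1), indices mod N. *)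
Fixpoint frz (N : nat) (a : nat -> Z) (k : nat) (d : nat) : Z * Z :=
  match d with
  | O => (0, 1)
  | S d' => let (x, y) := frz N a k d' in
            (y, a (Nat.modulo (k + d' + 1) N) * y - x)
  end.

Definition friese (N : nat) (E : nat -> nat -> bool) (k l : nat) : Z :=
  fst (frz N (fun l => Z.of_nat (tri_count N E l)) k (Nat.modulo (l + N - k) N)).

Definition arc_of (v w : vtx) : option arc :=
  match v, w with
  | U a, U b => if a <? b then Some (Up a b) else if b <? a then Some (Up b a) else None
  | L a, L b => if a <? b then Some (Low a b) else if b <? a then Some (Low b a) else None
  | U p, L q => Some (Conn p q)
  | L q, U p => Some (Conn p q)
  end.

Definition joined_in (T : arcset) (v w : vtx) : bool :=
  match arc_of v w with Some x => T x | None => false end.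

Definition zrange (a b : Z) : list Z :=
  map (fun n => a + Z.of_nat n) (seq 0 (Z.to_nat (b - a + 1))).

(** Polygon with vertices p°, ..., r°, s_∘, ..., q_∘ in cyclic order. *)
Definition strip_poly (p q r s : Z) : list vtx :=
  map U (zrange p r) ++ map L (zrange s q).

(** Sides of the polygon, or arcs of T joining two of its vertices
    (the latter being the diagonals of P in T, i.e. T_P, when not sides). *)
Definition poly_E (T : arcset) (P : list vtx) (k l : nat) : bool :=
  let N := length P in
  Nat.eqb l (Nat.modulo (k + 1) N) || Nat.eqb k (Nat.modulo (l + 1) N)
  || joined_in T (nth k P (U 0)) (nth l P (U 0)).

(** T_P(i°, j_∘) for the polygon determined by (p°,q_∘), (r°,s_∘). *)
Definition Phi_val (T : arcset) (p q r s i j : Z) : Z :=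
  let P := strip_poly p q r s in
  friese (length P) (poly_E T P) (Z.to_nat (i - p)) (Z.to_nat (r - p + 1 + (j - s))).

Definition admissible (T : arcset) (p q r s i j : Z) : Prop :=
  T (Conn p q) = true /\ T (Conn r s) = true /\ p < i < r /\ s < j < q.

(** Fix a triangulation [T] of the strip and (i, j).  For an admissible choice
   of connecting arcs (p°,q∘), (r°,s∘) of [T] around (i, j), the polygon
   P = p°, ..., r°, s∘, ..., q∘ is triangulated by the arcs of [T] inside it.
   With [deg v] the number of triangles at [v] and M(c) = [[c,-1],[1,0]], its
   friese number between i° and j∘ is the top-left entry of the product of
   the M(deg v) over the vertices strictly between them. *)

From Stdlib Require Import ZArith List Lia Bool.
From Stdlib Require Import ClassicalEpsilon.
Import ListNotations.
Open Scope Z_scope.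

Record mat := mk { m00 : Z; m01 : Z; m10 : Z; m11 : Z }.

Definition mmul (A B : mat) : mat :=
  mk (m00 A * m00 B + m01 A * m10 B) (m00 A * m01 B + m01 A * m11 B)
     (m10 A * m00 B + m11 A * m10 B) (m10 A * m01 B + m11 A * m11 B).
Definition I2 : mat := mk 1 0 0 1.
Definition negI : mat := mk (-1) 0 0 (-1).
Definition det (A : mat) : Z := m00 A * m11 A - m01 A * m10 A.
Definition fmat (c : Z) : mat := mk c (-1) 1 0.

Ltac mat_simpl := unfold mmul, fmat, I2, negI, det in *; cbn [m00 m01 m10 m11] in *.

Lemma mat_eq (A B : mat) :
  m00 A = m00 B -> m01 A = m01 B -> m10 A = m10 B -> m11 A = m11 B -> A = B.
Proof. destruct A, B; simpl; intros; subst; reflexivity. Qed.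

Lemma mmul_assoc (A B C : mat) : mmul A (mmul B C) = mmul (mmul A B) C.
Proof. apply mat_eq; mat_simpl; ring. Qed.

Lemma mmul_1l (A : mat) : mmul I2 A = A.
Proof. destruct A; apply mat_eq; mat_simpl; ring. Qed.

Lemma mmul_1r (A : mat) : mmul A I2 = A.
Proof. destruct A; apply mat_eq; mat_simpl; ring. Qed.

Lemma det_mmul (A B : mat) : det (mmul A B) = det A * det B.
Proof. mat_simpl; ring. Qed.

Lemma det_fmat (c : Z) : det (fmat c) = 1.
Proof. mat_simpl; ring. Qed.

(** Gluing a triangle: M(X+1) M(1) M(Y+1) = M(X) M(Y).  This is the matrix
    form of adding an ear to a triangulated polygon. *)
Lemma fmat_glue (X Y : Z) :
  mmul (mmul (fmat (X + 1)) (fmat 1)) (fmat (Y + 1)) = mmul (fmat X) (fmat Y).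
Proof. apply mat_eq; mat_simpl; ring. Qed.

Lemma fmat0_square : mmul (fmat 0) (fmat 0) = negI.
Proof. apply mat_eq; reflexivity. Qed.

(** If [A B = -I] and [det A = 1], then [B A = -I] as well ([B] is [-A^-1]). *)
Lemma negI_rotate (A B : mat) : det A = 1 -> mmul A B = negI -> mmul B A = negI.
Proof.
  destruct A as [a b c d], B as [e f g h]; mat_simpl; intros Hd H.
  injection H; intros H4 H3 H2 H1.
  assert (E1 : e = -d).
  { assert (E : e * (a * d - b * c) = d * (a * e + b * g) - b * (c * e + d * g)) by ring.
    rewrite Hd, H1, H3 in E. lia. }
  assert (E2 : f = b).
  { assert (E : f * (a * d - b * c) = d * (a * f + b * h) - b * (c * f + d * h)) by ring.
    rewrite Hd, H2, H4 in E. lia. }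
  assert (E3 : g = c).
  { assert (E : g * (a * d - b * c) = a * (c * e + d * g) - c * (a * e + b * g)) by ring.
    rewrite Hd, H1, H3 in E. lia. }
  assert (E4 : h = -a).
  { assert (E : h * (a * d - b * c) = a * (c * f + d * h) - c * (a * f + b * h)) by ring.
    rewrite Hd, H2, H4 in E. lia. }
  subst. apply mat_eq; cbn [m00 m01 m10 m11]; nia.
Qed.

(** If [M(x) B M(y) C = -I] with [det B = 1], the top-left entries of [B] and
    [C] agree: this reads a frieze entry "around the other side" of a polygon. *)
Lemma corner_entry (x y : Z) (B C : mat) :
  det B = 1 -> mmul (mmul (mmul (fmat x) B) (fmat y)) C = negI -> m00 C = m00 B.
Proof.
  intros Hd H.
  set (K := mmul (mmul (fmat x) B) (fmat y)) in *.
  assert (HK : det K = 1) by (unfold K; rewrite !det_mmul, !det_fmat, Hd; ring).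
  assert (HK11 : m11 K = - m00 B) by (unfold K; destruct B; mat_simpl; ring).
  destruct K as [k0 k1 k2 k3], C as [e f g h]; mat_simpl.
  injection H; intros H4 H3 H2 H1.
  assert (E : e * (k0 * k3 - k1 * k2) = k3 * (k0 * e + k1 * g) - k1 * (k2 * e + k3 * g)) by ring.
  rewrite HK, H1, H3 in E. lia.
Qed.

Lemma negI_fmat_r (K : mat) (y : Z) : mmul K (fmat y) = negI -> m00 K = 0.
Proof. destruct K; intros H; apply (f_equal m01) in H; mat_simpl; lia. Qed.

Lemma negI_fmat_l (K : mat) (y : Z) : mmul (fmat y) K = negI -> m00 K = 0.
Proof. destruct K; intros H; apply (f_equal m10) in H; mat_simpl; lia. Qed.

(** Top-left entry of [B M(x+y+1) A], used when a path crosses the apex of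
    the triangle on which a polygon is cut. *)
Lemma entry_glue (A B : mat) (x y : Z) :
  m00 (mmul (mmul B (fmat (x + y + 1))) A) =
  m00 B * m00 (mmul (fmat x) A) + m00 B * m00 A + m00 A * m00 (mmul B (fmat y)).
Proof. destruct A, B; mat_simpl; ring. Qed.

(** The 2x2 minor identity behind the SL2 relation of the tiling. *)
Lemma entry_minor (M : mat) (x y : Z) : det M = 1 ->
  m00 (mmul M (fmat x)) * m00 (mmul (fmat y) M)
  - m00 (mmul (mmul (fmat y) M) (fmat x)) * m00 M = 1.
Proof. destruct M; intros H; mat_simpl; nia. Qed.

(** [mprod f [v1; ...; vn] = M(f vn) ... M(f v1)]. *)
Fixpoint mprod {A : Type} (f : A -> Z) (l : list A) : mat :=
  match l with
  | [] => I2
  | v :: l' => mmul (mprod f l') (fmat (f v))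
  end.

Lemma mprod_app {A : Type} (f : A -> Z) (l1 l2 : list A) :
  mprod f (l1 ++ l2) = mmul (mprod f l2) (mprod f l1).
Proof.
  induction l1 as [|v l1 IH]; simpl.
  - rewrite mmul_1r; reflexivity.
  - rewrite IH, mmul_assoc; reflexivity.
Qed.

Lemma mprod_ext {A : Type} (f g : A -> Z) (l : list A) :
  (forall x, In x l -> f x = g x) -> mprod f l = mprod g l.
Proof.
  induction l as [|v l IH]; intros H; simpl; auto.
  rewrite IH, (H v); auto; [left; auto | intros; apply H; right; auto].
Qed.

Lemma det_mprod {A : Type} (f : A -> Z) (l : list A) : det (mprod f l) = 1.
Proof. induction l; simpl; auto. rewrite det_mmul, IHl, det_fmat; auto. Qed.

(** The boundary order of a strip polygon: upper vertices by increasing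
    index (p°, (p+1)°, ...), then lower vertices by increasing index. *)
Definition vlt (v w : vtx) : bool :=
  match v, w with
  | U a, U b => a <? b
  | U _, L _ => true
  | L _, U _ => false
  | L a, L b => a <? b
  end.

Definition veqb (v w : vtx) : bool :=
  match v, w with
  | U a, U b => a =? b
  | L a, L b => a =? b
  | _, _ => false
  end.

Lemma veqb_spec (v w : vtx) : veqb v w = true <-> v = w.
Proof.
  destruct v as [a|a], w as [b|b]; simpl; split; intros H; try discriminate;
  try (apply Z.eqb_eq in H; subst; auto); injection H; intros; subst; apply Z.eqb_refl.
Qed.

Lemma veqb_false (v w : vtx) : veqb v w = false <-> v <> w.
Proof. rewrite <- not_true_iff_false, veqb_spec; tauto. Qed.

Lemma veqb_refl (v : vtx) : veqb v v = true.
Proof. apply veqb_spec; auto. Qed.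

Lemma vlt_irrefl (v : vtx) : vlt v v = false.
Proof. destruct v; simpl; apply Z.ltb_irrefl. Qed.

Lemma vlt_asym (v w : vtx) : vlt v w = true -> vlt w v = false.
Proof.
  destruct v as [a|a], w as [b|b]; simpl; intros H; auto; try discriminate;
  apply Z.ltb_lt in H; apply Z.ltb_ge; lia.
Qed.

Lemma vlt_total (v w : vtx) : v <> w -> vlt v w = true \/ vlt w v = true.
Proof.
  destruct v as [a|a], w as [b|b]; intros H; simpl; auto;
  (destruct (Z.lt_trichotomy a b) as [h|[h|h]];
   [left; apply Z.ltb_lt; auto | subst; tauto | right; apply Z.ltb_lt; auto]).
Qed.

Section TriangleCount.

Variable J : vtx -> vtx -> bool.

Definition tri_at (v : vtx) (yz : vtx * vtx) : bool :=
  let (y, z) := yz in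
  vlt y z && negb (veqb y v) && negb (veqb z v) && J v y && J v z && J y z.

Definition ntri (V : list vtx) (v : vtx) : nat :=
  length (filter (tri_at v) (list_prod V V)).

Lemma tri_at_spec (v y z : vtx) : tri_at v (y, z) = true <->
  vlt y z = true /\ y <> v /\ z <> v /\ J v y = true /\ J v z = true /\ J y z = true.
Proof. unfold tri_at; rewrite !andb_true_iff, !negb_true_iff, !veqb_false; tauto. Qed.

Lemma NoDup_list_prod {A B : Type} (l : list A) (l' : list B) :
  NoDup l -> NoDup l' -> NoDup (list_prod l l').
Proof.
  intros H H'; induction H; simpl; [constructor|].
  apply NoDup_app; auto.
  - apply NoDup_map_NoDup_ForallPairs; auto. intros a b _ _ E; injection E; auto.
  - intros [a b] Ha Hb. apply in_map_iff in Ha. destruct Ha as [c [Ec _]].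
    injection Ec; intros; subst. apply in_prod_iff in Hb; tauto.
Qed.

Lemma length_NoDup_same {A : Type} (l1 l2 : list A) : NoDup l1 -> NoDup l2 ->
  (forall x, In x l1 <-> In x l2) -> length l1 = length l2.
Proof.
  intros H1 H2 H. apply Nat.le_antisymm; apply NoDup_incl_length; auto; intros x; apply H.
Qed.

Lemma ntri_split3 (V W1 W2 W3 : list vtx) (v : vtx) :
  NoDup V -> NoDup W1 -> NoDup W2 -> NoDup W3 ->
  incl W1 V -> incl W2 V -> incl W3 V ->
  (forall y z, In y V -> In z V -> tri_at v (y, z) = true ->
     (In y W1 /\ In z W1) \/ (In y W2 /\ In z W2) \/ (In y W3 /\ In z W3)) ->
  (forall y z, tri_at v (y, z) = true -> In y W1 -> In z W1 -> In y W2 -> In z W2 -> False) ->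
  (forall y z, tri_at v (y, z) = true -> In y W1 -> In z W1 -> In y W3 -> In z W3 -> False) ->
  (forall y z, tri_at v (y, z) = true -> In y W2 -> In z W2 -> In y W3 -> In z W3 -> False) ->
  ntri V v = (ntri W1 v + ntri W2 v + ntri W3 v)%nat.
Proof.
  intros HV H1 H2 H3 I1 I2 I3 Hc D12 D13 D23.
  unfold ntri. rewrite <- !length_app.
  apply length_NoDup_same.
  - apply NoDup_filter, NoDup_list_prod; auto.
  - repeat apply NoDup_app; try (apply NoDup_filter, NoDup_list_prod; auto);
    intros [y z] Ha Hb; try apply in_app_iff in Hb; try apply in_app_iff in Ha;
    repeat match goal with
    | H : In _ (filter _ _) |- _ =>
        apply filter_In in H; destruct H as [H ?]; apply in_prod_iff in H
    | H : _ \/ _ |- _ => destruct H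
    | H : _ /\ _ |- _ => destruct H
    end;
    first [eapply D12; eauto; tauto | eapply D13; eauto; tauto | eapply D23; eauto; tauto].
  - intros [y z]. rewrite !in_app_iff, !filter_In, !in_prod_iff. split.
    + intros [[Hy Hz] Ht]. destruct (Hc y z Hy Hz Ht) as [[? ?]|[[? ?]|[? ?]]]; tauto.
    + intros [[[[? ?] Ht]|[[? ?] Ht]]|[[? ?] Ht]]; split; auto.
Qed.

Lemma ntri_split2 (V W1 W2 : list vtx) (v : vtx) :
  NoDup V -> NoDup W1 -> NoDup W2 -> incl W1 V -> incl W2 V ->
  (forall y z, In y V -> In z V -> tri_at v (y, z) = true ->
     (In y W1 /\ In z W1) \/ (In y W2 /\ In z W2)) ->
  (forall y z, tri_at v (y, z) = true -> In y W1 -> In z W1 -> In y W2 -> In z W2 -> False) ->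
  ntri V v = (ntri W1 v + ntri W2 v)%nat.
Proof.
  intros HV H1 H2 I1 I2 Hc D. rewrite (ntri_split3 V W1 W2 [] v); simpl; try lia;
  auto using NoDup_nil, incl_nil_l; intros y z Hy Hz Ht; try tauto.
  destruct (Hc y z); auto.
Qed.

Lemma ntri_restrict (V W : list vtx) (v : vtx) : NoDup V -> NoDup W -> incl W V ->
  (forall y z, In y V -> In z V -> tri_at v (y, z) = true -> In y W /\ In z W) ->
  ntri V v = ntri W v.
Proof.
  intros HV HW I Hc. rewrite (ntri_split2 V W [] v); simpl; try lia;
  auto using NoDup_nil, incl_nil_l; intros; simpl in *; try tauto.
Qed.

Lemma ntri_two (x y v : vtx) : v = x \/ v = y -> ntri [x; y] v = 0%nat.
Proof.
  intros Hv. unfold ntri. simpl.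
  destruct Hv as [->| ->]; unfold tri_at; rewrite ?veqb_refl, ?vlt_irrefl; simpl;
  rewrite ?andb_false_r; simpl; auto;
  destruct (vlt y x), (vlt x y), (veqb x y), (veqb y x); simpl; rewrite ?andb_false_r; auto.
Qed.

Hypothesis J_sym : forall a b, J a b = J b a.

Lemma ntri_triangle (x y z : vtx) :
  x <> y -> x <> z -> y <> z -> J x y = true -> J x z = true -> J y z = true ->
  ntri [x; y; z] x = 1%nat.
Proof.
  intros Hxy Hxz Hyz Jxy Jxz Jyz. unfold ntri.
  assert (Ok : forall a b, vlt a b = true -> (a = y /\ b = z \/ a = z /\ b = y) ->
    length (filter (tri_at x) (list_prod [x; y; z] [x; y; z])) = 1%nat).
  { intros a b Lab Hab. change 1%nat with (length [(a, b)]).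
    apply length_NoDup_same.
    - apply NoDup_filter, NoDup_list_prod; repeat constructor; simpl; intuition.
    - repeat constructor; simpl; auto.
    - intros [c d]; rewrite filter_In, in_prod_iff, tri_at_spec; simpl; split.
      + intros [[Hc Hd] [H1 [H2 [H3 _]]]].
        destruct Hc as [Hc|[Hc|[Hc|[]]]]; destruct Hd as [Hd|[Hd|[Hd|[]]]];
        destruct Hab as [[-> ->]|[-> ->]]; subst; try tauto;
        try (rewrite vlt_irrefl in H1; discriminate);
        rewrite vlt_asym in H1; auto; discriminate.
      + intros [E|[]]; injection E; intros; subst.
        destruct Hab as [[-> ->]|[-> ->]]; rewrite ?(J_sym z y) in *; intuition. }
  destruct (vlt_total y z Hyz); eapply Ok; eauto.
Qed.

Lemma ntri_perm (V W : list vtx) (v : vtx) :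
  NoDup V -> NoDup W -> (forall x, In x V <-> In x W) -> ntri V v = ntri W v.
Proof.
  intros HV HW H. apply ntri_restrict; auto.
  - intros x; apply H.
  - intros y z Hy Hz _; split; apply H; auto.
Qed.

Lemma ntri_triangle_any (x y z v : vtx) :
  x <> y -> x <> z -> y <> z -> J x y = true -> J x z = true -> J y z = true ->
  (v = x \/ v = y \/ v = z) -> ntri [x; y; z] v = 1%nat.
Proof.
  intros Dxy Dxz Dyz Jxy Jxz Jyz [ -> | [ -> | -> ] ].
  - apply ntri_triangle; auto.
  - rewrite (ntri_perm _ [y; x; z]).
    + apply ntri_triangle; auto; rewrite J_sym; auto.
    + repeat constructor; simpl; intuition.
    + repeat constructor; simpl; intuition.
    + intros; simpl; tauto.
  - rewrite (ntri_perm _ [z; x; y]).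
    + apply ntri_triangle; auto; rewrite J_sym; auto.
    + repeat constructor; simpl; intuition.
    + repeat constructor; simpl; intuition.
    + intros; simpl; tauto.
Qed.

End TriangleCount.

(** Abstract triangulated polygons.  A polygon is its list [V] of vertices in
    cyclic order; [J] relates vertices joined by a side or a diagonal. *)

Definition nthv (V : list vtx) (k : nat) : vtx := nth k V (U 0).

Definition seg (V : list vtx) (x y : nat) : list vtx := map (nthv V) (seq x (y - x)).

Lemma nthv_In (V : list vtx) (k : nat) : (k < length V)%nat -> In (nthv V k) V.
Proof. apply nth_In. Qed.

Lemma In_nthv (V : list vtx) (y : vtx) :
  In y V -> exists k, (k < length V)%nat /\ nthv V k = y.
Proof. apply In_nth. Qed.

Lemma nthv_inj (V : list vtx) (i j : nat) : NoDup V ->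
  (i < length V)%nat -> (j < length V)%nat -> nthv V i = nthv V j -> i = j.
Proof. intros H; rewrite NoDup_nth in H; apply H. Qed.

Lemma nthv_firstn (V : list vtx) (m k : nat) : (k < m)%nat -> nthv (firstn m V) k = nthv V k.
Proof.
  intros; unfold nthv; rewrite nth_firstn.
  replace (k <? m)%nat with true; auto. symmetry; apply Nat.ltb_lt; auto.
Qed.

Lemma nthv_skipn (V : list vtx) (m k : nat) : nthv (skipn m V) k = nthv V (m + k).
Proof. unfold nthv; rewrite nth_skipn; auto. Qed.

Lemma map_ext_seq {A : Type} (f g : nat -> A) (s n : nat) :
  (forall k, (s <= k < s + n)%nat -> f k = g k) -> map f (seq s n) = map g (seq s n).
Proof.
  revert s; induction n; intros s H; simpl; auto.
  rewrite H by lia. rewrite IHn; auto. intros; apply H; lia.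
Qed.

Lemma map_seq_shift {A : Type} (f : nat -> A) (w s n : nat) :
  map (fun k => f (w + k)%nat) (seq s n) = map f (seq (w + s) n).
Proof.
  revert s; induction n; intros s; simpl; auto.
  rewrite IHn. replace (w + S s)%nat with (S (w + s)) by lia. auto.
Qed.

Lemma seg_app (V : list vtx) (x m y : nat) :
  (x <= m <= y)%nat -> seg V x y = seg V x m ++ seg V m y.
Proof.
  intros. unfold seg. replace (y - x)%nat with ((m - x) + (y - m))%nat by lia.
  rewrite seq_app, map_app. replace (x + (m - x))%nat with m by lia. auto.
Qed.

Lemma seg_empty (V : list vtx) (x : nat) : seg V x x = [].
Proof. unfold seg; rewrite Nat.sub_diag; auto. Qed.

Lemma seg_split (V : list vtx) (x m y : nat) : (x <= m)%nat -> (m < y)%nat ->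
  seg V x y = seg V x m ++ nthv V m :: seg V (S m) y.
Proof.
  intros. rewrite (seg_app V x m y) by lia. f_equal.
  unfold seg. replace (y - m)%nat with (S (y - S m)) by lia. reflexivity.
Qed.

Lemma seg_last (V : list vtx) (x y : nat) : (x <= y)%nat -> seg V x (S y) = seg V x y ++ [nthv V y].
Proof. intros. rewrite (seg_split V x y (S y)), seg_empty by lia. auto. Qed.

Lemma seg_firstn (V : list vtx) (m x y : nat) : (y <= m)%nat -> seg (firstn m V) x y = seg V x y.
Proof. intros; unfold seg; apply map_ext_seq; intros; apply nthv_firstn; lia. Qed.

Lemma seg_skipn (V : list vtx) (w x y : nat) : seg (skipn w V) x y = seg V (w + x) (w + y).
Proof.
  unfold seg. replace (w + y - (w + x))%nat with (y - x)%nat by lia.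
  rewrite <- map_seq_shift. apply map_ext_seq; intros; apply nthv_skipn.
Qed.

Lemma In_seg (V : list vtx) (x y : nat) (v : vtx) :
  In v (seg V x y) -> exists k, (x <= k < y)%nat /\ v = nthv V k.
Proof.
  unfold seg; intros H; apply in_map_iff in H. destruct H as [k [E Hk]].
  apply in_seq in Hk. exists k; split; auto; lia.
Qed.

Lemma NoDup_firstn' (V : list vtx) (m : nat) : NoDup V -> NoDup (firstn m V).
Proof. intros H. rewrite <- (firstn_skipn m V) in H. eapply NoDup_app_remove_r; eauto. Qed.

Lemma NoDup_skipn' (V : list vtx) (m : nat) : NoDup V -> NoDup (skipn m V).
Proof. intros H. rewrite <- (firstn_skipn m V) in H. eapply NoDup_app_remove_l; eauto. Qed.

Lemma In_firstn_idx (V : list vtx) (w t : nat) : NoDup V ->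
  (t < length V)%nat -> (w < length V)%nat ->
  In (nthv V t) (firstn (S w) V) <-> (t <= w)%nat.
Proof.
  intros HN Ht Hw. split.
  - intros H. apply In_nthv in H. destruct H as [k [Hk E]].
    rewrite firstn_length_le in Hk by lia. rewrite nthv_firstn in E by lia.
    apply nthv_inj in E; auto; lia.
  - intros H. rewrite <- (nthv_firstn V (S w) t) by lia. apply nthv_In.
    rewrite firstn_length_le; lia.
Qed.

Lemma In_skipn_idx (V : list vtx) (w t : nat) : NoDup V ->
  (t < length V)%nat -> (w < length V)%nat ->
  In (nthv V t) (skipn w V) <-> (w <= t)%nat.
Proof.
  intros HN Ht Hw. split.
  - intros H. apply In_nthv in H. destruct H as [k [Hk E]].
    rewrite length_skipn in Hk. rewrite nthv_skipn in E.
    apply nthv_inj in E; auto; lia.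
  - intros H. replace t with (w + (t - w))%nat by lia. rewrite <- nthv_skipn. apply nthv_In.
    rewrite length_skipn; lia.
Qed.

Lemma In_triple_idx (V : list vtx) (a b c t : nat) : NoDup V -> (t < length V)%nat ->
  (a < length V)%nat -> (b < length V)%nat -> (c < length V)%nat ->
  In (nthv V t) [nthv V a; nthv V b; nthv V c] <-> (t = a \/ t = b \/ t = c)%nat.
Proof.
  intros. simpl. split.
  - intros [E|[E|[E|[]]]]; apply nthv_inj in E; auto.
  - intros [E|[E|E]]; subst; auto.
Qed.

Definition tri_poly (J : vtx -> vtx -> bool) (V : list vtx) : Prop :=
  (2 <= length V)%nat /\ NoDup V /\
  (forall k, (S k < length V)%nat -> J (nthv V k) (nthv V (S k)) = true) /\
  J (nthv V 0) (nthv V (length V - 1)) = true /\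
  (forall a b c d, (a < b < c)%nat -> (c < d < length V)%nat ->
      J (nthv V a) (nthv V c) = true -> J (nthv V b) (nthv V d) = true -> False) /\
  (forall a c, (a < c < length V)%nat -> J (nthv V a) (nthv V c) = false ->
      exists b d, (d < length V)%nat /\ (a < b < c)%nat /\ (d < a \/ c < d)%nat /\
                  J (nthv V b) (nthv V d) = true).

Definition symmetric (J : vtx -> vtx -> bool) : Prop := forall a b, J a b = J b a.

Lemma max_search (P : nat -> bool) (n : nat) : P 1%nat = true -> (1 < n)%nat ->
  exists w, (1 <= w < n)%nat /\ P w = true /\ forall u, (w < u < n)%nat -> P u = false.
Proof.
  intros H1; induction n; intros Hn; [lia|].
  destruct (Nat.eq_dec n 1) as [->|Hn1].
  - exists 1%nat; split; [lia|split; auto]. intros; lia.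
  - destruct (P n) eqn:Pn.
    + exists n; split; [lia|split; auto]. intros; lia.
    + destruct IHn as [w [Hw1 [Hw2 Hw3]]]; [lia|].
      exists w; split; [lia|split; auto]. intros u Hu.
      destruct (Nat.eq_dec u n); [subst; auto|]. apply Hw3; lia.
Qed.

Section TriangulatedPolygon.

Variable J : vtx -> vtx -> bool.
Hypothesis J_sym : symmetric J.

(** The base side [v_0 v_n] of a polygon with at least three vertices lies on
    a triangle [v_0 v_w v_n] of the triangulation: take [w] maximal with
    [v_0 v_w] joined. *)
Lemma apex_exists (V : list vtx) : tri_poly J V -> (3 <= length V)%nat ->
  exists w, (0 < w < length V - 1)%nat /\ J (nthv V 0) (nthv V w) = true /\
            J (nthv V w) (nthv V (length V - 1)) = true.
Proof.
  intros [H2 [HN [Hc [H0n [Hnc Hmax]]]]] H3.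
  set (n := (length V - 1)%nat) in *.
  destruct (max_search (fun u => J (nthv V 0) (nthv V u)) n) as [w [Hw [Jw Hwm]]].
  - apply (Hc 0%nat); lia.
  - lia.
  - exists w; split; [lia|split; auto].
    destruct (J (nthv V w) (nthv V n)) eqn:E; auto. exfalso.
    destruct (Nat.eq_dec (S w) n) as [e|ne].
    + rewrite <- e in E. rewrite Hc in E; [discriminate|lia].
    + destruct (Hmax w n) as [b [d [Hd [Hb [Hdd Jbd]]]]]; [lia|auto|].
      destruct Hdd as [Hdd|Hdd]; [|lia].
      destruct (Nat.eq_dec d 0) as [->|dn].
      * rewrite J_sym in Jbd. rewrite Hwm in Jbd; [discriminate|lia].
      * apply (Hnc 0%nat d w b); try lia; auto. rewrite J_sym; auto.
Qed.

Lemma tri_poly_firstn (V : list vtx) (w : nat) : tri_poly J V -> (1 <= w < length V)%nat ->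
  J (nthv V 0) (nthv V w) = true -> tri_poly J (firstn (S w) V).
Proof.
  intros [H2 [HN [Hc [H0n [Hnc Hmax]]]]] Hw Jw.
  assert (L : length (firstn (S w) V) = S w) by (apply firstn_length_le; lia).
  unfold tri_poly; rewrite L. repeat split.
  - lia.
  - apply NoDup_firstn'; auto.
  - intros k Hk; rewrite !nthv_firstn by lia; apply Hc; lia.
  - rewrite !nthv_firstn by lia. replace (S w - 1)%nat with w by lia; auto.
  - intros a b c d Habc Hcd; rewrite !nthv_firstn by lia; apply Hnc; lia.
  - intros a c Hac; rewrite !nthv_firstn by lia; intros Jf.
    destruct (Hmax a c) as [b [d [Hd [Hb [Hdd Jbd]]]]]; [lia|auto|].
    destruct (le_lt_dec d w) as [dw|dw].
    + exists b, d; rewrite !nthv_firstn by lia; repeat split; auto; lia.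
    + exfalso. apply (Hnc 0%nat b w d); try lia; auto.
Qed.

Lemma tri_poly_skipn (V : list vtx) (w : nat) : tri_poly J V -> (w < length V - 1)%nat ->
  J (nthv V w) (nthv V (length V - 1)) = true -> tri_poly J (skipn w V).
Proof.
  intros [H2 [HN [Hc [H0n [Hnc Hmax]]]]] Hw Jw.
  assert (L : length (skipn w V) = (length V - w)%nat) by (rewrite length_skipn; auto).
  unfold tri_poly; rewrite L. repeat split.
  - lia.
  - apply NoDup_skipn'; auto.
  - intros k Hk; rewrite !nthv_skipn. replace (w + S k)%nat with (S (w + k)) by lia.
    apply Hc; lia.
  - rewrite !nthv_skipn. replace (w + 0)%nat with w by lia.
    replace (w + (length V - w - 1))%nat with (length V - 1)%nat by lia. auto.
  - intros a b c d Habc Hcd; rewrite !nthv_skipn; apply Hnc; lia.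
  - intros a c Hac; rewrite !nthv_skipn; intros Jf.
    destruct (Hmax (w + a) (w + c))%nat as [b [d [Hd [Hb [Hdd Jbd]]]]]; [lia|auto|].
    destruct (le_lt_dec w d) as [dw|dw].
    + exists (b - w)%nat, (d - w)%nat; rewrite !nthv_skipn.
      replace (w + (b - w))%nat with b by lia. replace (w + (d - w))%nat with d by lia.
      repeat split; auto; lia.
    + exfalso. apply (Hnc d w b (length V - 1)%nat); try lia; auto. rewrite J_sym; auto.
Qed.

(** Frieze data of a polygon: [deg V v] is the number of triangles at [v];
    [fval V i j] is the top-left entry of the product of the [M(deg v)] over
    the vertices strictly between [v_i] and [v_j]; it is the frieze number
    X(v_i, v_j) of the Conway-Coxeter frieze of [V]. *)
Definition deg (V : list vtx) (v : vtx) : Z := Z.of_nat (ntri J V v).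

Definition interior (V : list vtx) : list vtx := seg V 1 (length V - 1).

Definition fval (V : list vtx) (i j : nat) : Z := m00 (mprod (deg V) (seg V (S i) j)).

Definition fvalz (V : list vtx) (i j : nat) : Z := if (i <? j)%nat then fval V i j else 0.

(** The glide identity of a triangulated polygon: going once around the
    boundary gives [M(X) M(Y)], with free parameters [X], [Y] at the two ends
    of the base side.  For [X = Y = 0] it is the Conway-Coxeter relation
    "product of all the M(deg v) is -I"; the parameters record triangles
    glued along the base side and make the statement inductive. *)
Definition glide (V : list vtx) : Prop := forall X Y,
  mmul (mmul (fmat (X + deg V (nthv V (length V - 1)))) (mprod (deg V) (interior V)))
       (fmat (Y + deg V (nthv V 0))) = mmul (fmat X) (fmat Y).

Lemma glide_negI (V : list vtx) : glide V ->
  mmul (mmul (fmat (deg V (nthv V (length V - 1)))) (mprod (deg V) (interior V)))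
       (fmat (deg V (nthv V 0))) = negI.
Proof. intros G. rewrite <- fmat0_square, <- G. reflexivity. Qed.

Lemma fval_wrap_left (V : list vtx) (i : nat) : glide V -> (i < length V - 1)%nat ->
  m00 (mmul (fmat (deg V (nthv V (length V - 1)))) (mprod (deg V) (seg V (S i) (length V - 1))))
  = fvalz V 0 i.
Proof.
  intros G Hi. pose proof (glide_negI V G) as H. unfold interior in H.
  set (c := deg V) in *. set (n := (length V - 1)%nat) in *.
  destruct (Nat.eq_dec i 0) as [->|ni].
  - unfold fvalz. rewrite Nat.ltb_irrefl. eapply negI_fmat_r; eauto.
  - rewrite (seg_split V 1 i n), mprod_app in H by lia. simpl in H.
    set (P1 := mprod c (seg V 1 i)) in *. set (P2 := mprod c (seg V (S i) n)) in *.
    assert (H' : mmul (mmul (fmat (c (nthv V n))) P2)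
                      (mmul (mmul (fmat (c (nthv V i))) P1) (fmat (c (nthv V 0)))) = negI).
    { rewrite <- H, !mmul_assoc. reflexivity. }
    apply negI_rotate in H'; [|rewrite det_mmul, det_fmat; unfold P2; rewrite det_mprod; ring].
    apply corner_entry in H'; [|apply det_mprod].
    rewrite H'. unfold fvalz, fval. replace (0 <? i)%nat with true by (symmetry; apply Nat.ltb_lt; lia).
    reflexivity.
Qed.

Lemma fval_wrap_right (V : list vtx) (j : nat) : glide V -> (0 < j <= length V - 1)%nat ->
  m00 (mmul (mprod (deg V) (seg V 1 j)) (fmat (deg V (nthv V 0)))) = fvalz V j (length V - 1).
Proof.
  intros G Hj. pose proof (glide_negI V G) as H. unfold interior in H.
  set (c := deg V) in *. set (n := (length V - 1)%nat) in *.
  destruct (Nat.eq_dec j n) as [->|nj].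
  - unfold fvalz. rewrite Nat.ltb_irrefl. rewrite <- mmul_assoc in H. eapply negI_fmat_l; eauto.
  - rewrite (seg_split V 1 j n), mprod_app in H by lia. simpl in H.
    set (P1 := mprod c (seg V 1 j)) in *. set (P2 := mprod c (seg V (S j) n)) in *.
    assert (H' : mmul (mmul (mmul (fmat (c (nthv V n))) P2) (fmat (c (nthv V j))))
                      (mmul P1 (fmat (c (nthv V 0)))) = negI).
    { rewrite <- H, !mmul_assoc. reflexivity. }
    apply corner_entry in H'; [|apply det_mprod].
    rewrite H'. unfold fvalz, fval. replace (j <? n)%nat with true by (symmetry; apply Nat.ltb_lt; lia).
    reflexivity.
Qed.

Definition frieze_spec (V : list vtx) : Prop :=
  forall i j, (i < j < length V)%nat ->
    1 <= fval V i j /\ (fval V i j = 1 <-> J (nthv V i) (nthv V j) = true).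

Lemma fvalz_nonneg (V : list vtx) (i j : nat) : frieze_spec V -> (j < length V)%nat ->
  0 <= fvalz V i j.
Proof.
  intros H Hj. unfold fvalz. destruct (Nat.ltb_spec i j); [|lia].
  destruct (H i j); lia.
Qed.

Lemma fvalz_pos (V : list vtx) (i j : nat) : frieze_spec V -> (i < j < length V)%nat ->
  1 <= fvalz V i j.
Proof.
  intros H Hj. unfold fvalz. destruct (Nat.ltb_spec i j); [|lia]. apply H; lia.
Qed.

Lemma tri_at_indices (V : list vtx) (k : nat) (y z : vtx) :
  tri_at J (nthv V k) (y, z) = true -> In y V -> In z V ->
  exists a b, (a < length V)%nat /\ (b < length V)%nat /\
    y = nthv V a /\ z = nthv V b /\ a <> k /\ b <> k /\ a <> b /\
    J (nthv V k) (nthv V a) = true /\ J (nthv V k) (nthv V b) = true /\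
    J (nthv V a) (nthv V b) = true.
Proof.
  intros Ht Hy Hz. apply In_nthv in Hy, Hz.
  destruct Hy as [a [Ha <-]], Hz as [b [Hb <-]].
  exists a, b. apply tri_at_spec in Ht. destruct Ht as [Lt [Ny [Nz [A [B C]]]]].
  repeat split; auto; intros ->; auto. rewrite vlt_irrefl in Lt; discriminate.
Qed.

Lemma ntri_split3_idx (V W1 W2 W3 : list vtx) (P1 P2 P3 : nat -> Prop) (k : nat) :
  NoDup V -> NoDup W1 -> NoDup W2 -> NoDup W3 -> incl W1 V -> incl W2 V -> incl W3 V ->
  (forall t, (t < length V)%nat -> In (nthv V t) W1 <-> P1 t) ->
  (forall t, (t < length V)%nat -> In (nthv V t) W2 <-> P2 t) ->
  (forall t, (t < length V)%nat -> In (nthv V t) W3 <-> P3 t) ->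
  (forall a b, (a < length V)%nat -> (b < length V)%nat -> a <> k -> b <> k -> a <> b ->
     J (nthv V k) (nthv V a) = true -> J (nthv V k) (nthv V b) = true ->
     J (nthv V a) (nthv V b) = true ->
     ((P1 a /\ P1 b) \/ (P2 a /\ P2 b) \/ (P3 a /\ P3 b)) /\
     ~ (P1 a /\ P1 b /\ P2 a /\ P2 b) /\ ~ (P1 a /\ P1 b /\ P3 a /\ P3 b) /\
     ~ (P2 a /\ P2 b /\ P3 a /\ P3 b)) ->
  ntri J V (nthv V k) =
    (ntri J W1 (nthv V k) + ntri J W2 (nthv V k) + ntri J W3 (nthv V k))%nat.
Proof.
  intros HV N1 N2 N3 I1 I2 I3 M1 M2 M3 Hpart.
  assert (Tri : forall y z, tri_at J (nthv V k) (y, z) = true -> In y V -> In z V ->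
    exists a b, (a < length V)%nat /\ (b < length V)%nat /\ y = nthv V a /\ z = nthv V b /\
      ((P1 a /\ P1 b) \/ (P2 a /\ P2 b) \/ (P3 a /\ P3 b)) /\
      ~ (P1 a /\ P1 b /\ P2 a /\ P2 b) /\ ~ (P1 a /\ P1 b /\ P3 a /\ P3 b) /\
      ~ (P2 a /\ P2 b /\ P3 a /\ P3 b)).
  { intros y z Ht Hy Hz.
    destruct (tri_at_indices V k y z Ht Hy Hz) as (a & b & Ha & Hb & -> & -> & H).
    exists a, b. repeat split; auto; apply Hpart; tauto. }
  apply ntri_split3; auto.
  - intros y z Hy Hz Ht.
    destruct (Tri y z Ht Hy Hz) as (a & b & Ha & Hb & -> & -> & C & _).
    rewrite M1, M1, M2, M2, M3, M3 by auto. exact C.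
  - intros y z Ht Hy Hz Hy' Hz'.
    destruct (Tri y z Ht (I1 _ Hy) (I1 _ Hz)) as (a & b & Ha & Hb & -> & -> & _ & D & _).
    apply D. rewrite <- M1, <- M1, <- M2, <- M2 by auto. tauto.
  - intros y z Ht Hy Hz Hy' Hz'.
    destruct (Tri y z Ht (I1 _ Hy) (I1 _ Hz)) as (a & b & Ha & Hb & -> & -> & _ & _ & D & _).
    apply D. rewrite <- M1, <- M1, <- M3, <- M3 by auto. tauto.
  - intros y z Ht Hy Hz Hy' Hz'.
    destruct (Tri y z Ht (I2 _ Hy) (I2 _ Hz)) as (a & b & Ha & Hb & -> & -> & _ & _ & _ & D).
    apply D. rewrite <- M2, <- M2, <- M3, <- M3 by auto. tauto.
Qed.

Section ApexSplit.

(** A triangulated polygon [V = v_0 ... v_n] together with the triangle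
    [v_0 v_w v_n] on its base side; it splits [V] into [V1 = v_0 ... v_w] and
    [V2 = v_w ... v_n]. *)
Variable V : list vtx.
Variable w : nat.
Hypothesis HT : tri_poly J V.
Hypothesis Hw0 : (0 < w)%nat.
Hypothesis Hwn : (w < length V - 1)%nat.
Hypothesis J0w : J (nthv V 0) (nthv V w) = true.
Hypothesis Jwn : J (nthv V w) (nthv V (length V - 1)) = true.

Lemma straddle (x y : nat) : (x < w < y)%nat -> (y < length V)%nat ->
  J (nthv V x) (nthv V y) = true -> x = 0%nat /\ y = (length V - 1)%nat.
Proof.
  destruct HT as [H2 [HN [Hc [H0n [Hnc Hmax]]]]]. intros Hxy Hy Jxy. split.
  - destruct (Nat.eq_dec x 0); auto. exfalso. apply (Hnc 0%nat x w y); auto; lia.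
  - destruct (Nat.eq_dec y (length V - 1)); auto. exfalso.
    apply (Hnc x w y (length V - 1)%nat); auto; lia.
Qed.

Lemma triangle_classify (i j k : nat) :
  (i < length V)%nat -> (j < length V)%nat -> (k < length V)%nat ->
  i <> j -> i <> k -> j <> k ->
  J (nthv V i) (nthv V j) = true -> J (nthv V i) (nthv V k) = true ->
  J (nthv V j) (nthv V k) = true ->
  ((i <= w /\ j <= w /\ k <= w) \/ (w <= i /\ w <= j /\ w <= k) \/
   ((i = 0 \/ i = w \/ i = length V - 1) /\ (j = 0 \/ j = w \/ j = length V - 1) /\
    (k = 0 \/ k = w \/ k = length V - 1)))%nat.
Proof.
  intros Hi Hj Hk Dij Dik Djk Jij Jik Jjk.
  assert (S1 : forall x y, (x < length V)%nat -> (y < length V)%nat ->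
     J (nthv V x) (nthv V y) = true -> (x < w)%nat -> (w < y)%nat ->
     x = 0%nat /\ y = (length V - 1)%nat).
  { intros x y Hx Hy Jxy H1 H2. apply straddle; auto. }
  pose proof (S1 i j Hi Hj Jij) as P1. pose proof (S1 j i Hj Hi ltac:(rewrite J_sym; auto)) as P2.
  pose proof (S1 i k Hi Hk Jik) as P3. pose proof (S1 k i Hk Hi ltac:(rewrite J_sym; auto)) as P4.
  pose proof (S1 j k Hj Hk Jjk) as P5. pose proof (S1 k j Hk Hj ltac:(rewrite J_sym; auto)) as P6.
  set (n := (length V - 1)%nat) in *. clearbody n.
  clear - P1 P2 P3 P4 P5 P6 Hi Hj Hk Dij Dik Djk Hw0 Hwn.
  destruct (lt_eq_lt_dec i w) as [[hi|hi]|hi]; destruct (lt_eq_lt_dec j w) as [[hj|hj]|hj];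
  destruct (lt_eq_lt_dec k w) as [[hk|hk]|hk];
  repeat match goal with
    | H : ?a -> ?b -> _, Ha : ?a, Hb : ?b |- _ => specialize (H Ha Hb)
    | H : _ /\ _ |- _ => destruct H
    end;
  repeat match goal with H : _ -> _ |- _ => clear H end;
  first [ left; repeat split; lia | right; left; repeat split; lia
        | right; right; repeat split; lia | exfalso; lia ].
Qed.

Local Notation V1 := (firstn (S w) V).
Local Notation V2 := (skipn w V).
Local Notation n := (length V - 1)%nat.

Definition piece_left (k : nat) : list vtx := if (k <=? w)%nat then V1 else [].
Definition piece_right (k : nat) : list vtx := if (w <=? k)%nat then V2 else [].
Definition piece_apex (k : nat) : list vtx :=
  if ((k =? 0) || (k =? w) || (k =? n))%nat then [nthv V 0; nthv V w; nthv V n] else [].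

Lemma piece_left_spec (k : nat) : NoDup (piece_left k) /\ incl (piece_left k) V /\
  forall t, (t < length V)%nat -> In (nthv V t) (piece_left k) <-> (k <= w /\ t <= w)%nat.
Proof.
  pose proof HT as [_ [HN _]]. unfold piece_left. destruct (Nat.leb_spec k w).
  - split; [apply NoDup_firstn'; auto|split].
    + intros x Hx. rewrite <- (firstn_skipn (S w) V). apply in_or_app; auto.
    + intros t Ht. rewrite In_firstn_idx by (auto; lia). tauto.
  - split; [constructor | split; [intros x [] | intros t Ht; simpl; lia]].
Qed.

Lemma piece_right_spec (k : nat) : NoDup (piece_right k) /\ incl (piece_right k) V /\
  forall t, (t < length V)%nat -> In (nthv V t) (piece_right k) <-> (w <= k /\ w <= t)%nat.
Proof.
  pose proof HT as [_ [HN _]]. unfold piece_right. destruct (Nat.leb_spec w k).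
  - split; [apply NoDup_skipn'; auto|split].
    + intros x Hx. rewrite <- (firstn_skipn w V). apply in_or_app; auto.
    + intros t Ht. rewrite In_skipn_idx by (auto; lia). tauto.
  - split; [constructor | split; [intros x [] | intros t Ht; simpl; lia]].
Qed.

Lemma piece_apex_spec (k : nat) : NoDup (piece_apex k) /\ incl (piece_apex k) V /\
  forall t, (t < length V)%nat -> In (nthv V t) (piece_apex k) <->
    ((k = 0 \/ k = w \/ k = n) /\ (t = 0 \/ t = w \/ t = n))%nat.
Proof.
  pose proof HT as [H2 [HN _]]. unfold piece_apex.
  destruct ((k =? 0) || (k =? w) || (k =? n))%nat eqn:Ek;
    rewrite ?orb_true_iff, ?orb_false_iff, ?Nat.eqb_eq, ?Nat.eqb_neq in Ek.
  - split; [|split].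
    + repeat constructor; simpl; intros E;
        repeat (destruct E as [E|E]; [apply nthv_inj in E; auto; lia|]); auto.
    + intros x [Hx|[Hx|[Hx|[]]]]; subst; apply nthv_In; lia.
    + intros t Ht. rewrite In_triple_idx by (auto; lia). tauto.
  - split; [constructor | split; [intros x [] | intros t Ht; simpl; tauto]].
Qed.

Lemma ntri_apex_split (k : nat) : (k < length V)%nat ->
  ntri J V (nthv V k) =
    ((if (k <=? w)%nat then ntri J V1 (nthv V k) else 0) +
     (if (w <=? k)%nat then ntri J V2 (nthv V k) else 0) +
     (if ((k =? 0) || (k =? w) || (k =? n))%nat then 1 else 0))%nat.
Proof.
  intros Hk. pose proof HT as [H2 [HN _]].
  destruct (piece_left_spec k) as (N1 & I1 & M1).
  destruct (piece_right_spec k) as (N2 & I2 & M2).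
  destruct (piece_apex_spec k) as (N3 & I3 & M3).
  rewrite (ntri_split3_idx V _ _ _ _ _ _ k HN N1 N2 N3 I1 I2 I3 M1 M2 M3).
  - unfold piece_left, piece_right, piece_apex.
    destruct (k <=? w)%nat, (w <=? k)%nat, ((k =? 0) || (k =? w) || (k =? n))%nat eqn:Ek;
    try reflexivity; rewrite (ntri_triangle_any J J_sym); auto;
    try (intros E; apply nthv_inj in E; auto; lia); try apply HT;
    rewrite !orb_true_iff, !Nat.eqb_eq in Ek; destruct Ek as [[Ek|Ek]|Ek]; subst; auto.
  - intros a b Ha Hb Nak Nbk Nab Ja Jb Jab. split.
    + destruct (triangle_classify k a b) as [C|[C|C]]; auto; tauto.
    + clear - Nak Nbk Nab Hw0 Hwn.
      split; [|split]; intros D;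
      repeat match goal with
      | H : _ /\ _ |- _ => destruct H
      | H : _ \/ _ |- _ => destruct H
      end; lia.
Qed.

Lemma length_V1 : length V1 = S w.
Proof. apply firstn_length_le; lia. Qed.

Lemma length_V2 : length V2 = (length V - w)%nat.
Proof. apply length_skipn. Qed.

Lemma deg_apex_split (k : nat) : (k < length V)%nat ->
  deg V (nthv V k) =
    (if (k <=? w)%nat then deg V1 (nthv V k) else 0) +
    (if (w <=? k)%nat then deg V2 (nthv V k) else 0) +
    (if ((k =? 0) || (k =? w) || (k =? n))%nat then 1 else 0).
Proof.
  intros Hk. unfold deg. rewrite ntri_apex_split by auto.
  destruct (k <=? w)%nat, (w <=? k)%nat, ((k =? 0) || (k =? w) || (k =? n))%nat; lia.
Qed.

Ltac deg_cases k :=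
  rewrite (deg_apex_split k) by lia;
  destruct (Nat.leb_spec k w), (Nat.leb_spec w k), (Nat.eqb_spec k 0),
    (Nat.eqb_spec k w), (Nat.eqb_spec k (length V - 1)%nat); simpl; lia.

Lemma deg_left (k : nat) : (0 < k < w)%nat -> deg V (nthv V k) = deg V1 (nthv V k).
Proof. intros; deg_cases k. Qed.

Lemma deg_right (k : nat) : (w < k < n)%nat -> deg V (nthv V k) = deg V2 (nthv V k).
Proof. intros; deg_cases k. Qed.

Lemma deg_first : deg V (nthv V 0) = deg V1 (nthv V 0) + 1.
Proof. deg_cases 0%nat. Qed.

Lemma deg_last : deg V (nthv V n) = deg V2 (nthv V n) + 1.
Proof. deg_cases (length V - 1)%nat. Qed.

Lemma deg_apex : deg V (nthv V w) = deg V1 (nthv V w) + deg V2 (nthv V w) + 1.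
Proof. deg_cases w. Qed.

Lemma mprod_seg_left (a b : nat) : (0 < a)%nat -> (b <= w)%nat ->
  mprod (deg V) (seg V a b) = mprod (deg V1) (seg V a b).
Proof.
  intros Ha Hb. apply mprod_ext. intros x Hx. apply In_seg in Hx.
  destruct Hx as [k [Hk ->]]. apply deg_left; lia.
Qed.

Lemma mprod_seg_right (a b : nat) : (w < a)%nat -> (b <= n)%nat ->
  mprod (deg V) (seg V a b) = mprod (deg V2) (seg V a b).
Proof.
  intros Ha Hb. apply mprod_ext. intros x Hx. apply In_seg in Hx.
  destruct Hx as [k [Hk ->]]. apply deg_right; lia.
Qed.

(** The glide identities of [V1] and [V2] combine, through the apex triangle
    ([fmat_glue]), into the glide identity of [V]. *)
Lemma glide_apex_split : glide V1 -> glide V2 -> glide V.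
Proof.
  intros G1 G2 X Y.
  assert (GA : forall X Y, mmul (mmul (fmat (X + deg V1 (nthv V w))) (mprod (deg V1) (seg V 1 w)))
                               (fmat (Y + deg V1 (nthv V 0))) = mmul (fmat X) (fmat Y)).
  { intros X' Y'. pose proof (G1 X' Y') as G. unfold interior in G. rewrite length_V1 in G.
    replace (S w - 1)%nat with w in G by lia.
    rewrite seg_firstn, !nthv_firstn in G by lia. exact G. }
  assert (GB : forall X Y, mmul (mmul (fmat (X + deg V2 (nthv V n))) (mprod (deg V2) (seg V (S w) n)))
                               (fmat (Y + deg V2 (nthv V w))) = mmul (fmat X) (fmat Y)).
  { intros X' Y'. pose proof (G2 X' Y') as G. unfold interior in G. rewrite length_V2 in G.
    rewrite seg_skipn, !nthv_skipn in G.
    replace (w + (length V - w - 1))%nat with n in G by lia.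
    replace (w + 1)%nat with (S w) in G by lia. rewrite Nat.add_0_r in G. exact G. }
  unfold interior. rewrite (seg_split V 1 w n), mprod_app by lia. simpl.
  rewrite (mprod_seg_left 1 w), (mprod_seg_right (S w) n), deg_last, deg_first, deg_apex by lia.
  set (Q1 := mprod (deg V1) (seg V 1 w)). set (Q2 := mprod (deg V2) (seg V (S w) n)).
  replace (X + (deg V2 (nthv V n) + 1)) with ((X + 1) + deg V2 (nthv V n)) by lia.
  replace (deg V1 (nthv V w) + deg V2 (nthv V w) + 1)
    with ((1 + deg V1 (nthv V w)) + deg V2 (nthv V w)) by lia.
  replace (Y + (deg V1 (nthv V 0) + 1)) with ((Y + 1) + deg V1 (nthv V 0)) by lia.
  rewrite !mmul_assoc, GB, <- !mmul_assoc, (mmul_assoc (fmat (1 + deg V1 (nthv V w)))), GA.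
  rewrite !mmul_assoc. apply fmat_glue.
Qed.

Lemma fval_left (i j : nat) : (j <= w)%nat -> fval V i j = fval V1 i j.
Proof.
  intros Hj. unfold fval. rewrite seg_firstn by lia. f_equal.
  destruct (Nat.le_gt_cases j (S i)).
  - unfold seg. replace (j - S i)%nat with 0%nat by lia. reflexivity.
  - apply mprod_seg_left; lia.
Qed.

Lemma fval_right (i j : nat) : (w <= i)%nat -> (j < length V)%nat ->
  fval V i j = fval V2 (i - w) (j - w).
Proof.
  intros Hi Hj. unfold fval. rewrite seg_skipn.
  replace (w + S (i - w))%nat with (S i) by lia.
  destruct (Nat.le_gt_cases j (S i)).
  - unfold seg. replace (w + (j - w) - S i)%nat with 0%nat by lia.
    replace (j - S i)%nat with 0%nat by lia. reflexivity.
  - replace (w + (j - w))%nat with j by lia. f_equal. apply mprod_seg_right; lia.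
Qed.

(** A frieze value across the apex [v_w] ([i < w < j]) in terms of values of
    [V1] and [V2] ([entry_glue] and the wrap-around readings). *)
Lemma fval_across (i j : nat) : glide V1 -> glide V2 -> (i < w < j)%nat -> (j < length V)%nat ->
  fval V i j = fval V2 0 (j - w) * fvalz V1 0 i + fval V2 0 (j - w) * fval V1 i w
               + fval V1 i w * fvalz V2 (j - w) (length V2 - 1).
Proof.
  intros G1 G2 Hij Hj.
  assert (EW1 := fval_wrap_left V1 i G1 ltac:(rewrite length_V1; lia)).
  rewrite length_V1 in EW1. replace (S w - 1)%nat with w in EW1 by lia.
  rewrite seg_firstn, nthv_firstn in EW1 by lia.
  assert (EW2 := fval_wrap_right V2 (j - w) G2 ltac:(rewrite length_V2; lia)).
  rewrite seg_skipn, nthv_skipn, Nat.add_0_r in EW2.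
  replace (w + 1)%nat with (S w) in EW2 by lia. replace (w + (j - w))%nat with j in EW2 by lia.
  assert (EA : fval V1 i w = m00 (mprod (deg V1) (seg V (S i) w))).
  { unfold fval. rewrite seg_firstn by lia. reflexivity. }
  assert (EB : fval V2 0 (j - w) = m00 (mprod (deg V2) (seg V (S w) j))).
  { unfold fval. rewrite seg_skipn. replace (w + 1)%nat with (S w) by lia.
    replace (w + (j - w))%nat with j by lia. reflexivity. }
  unfold fval at 1. rewrite (seg_split V (S i) w j), mprod_app by lia. cbn [mprod].
  rewrite (mprod_seg_left (S i) w), (mprod_seg_right (S w) j), deg_apex, entry_glue by lia.
  rewrite EW1, EW2, EA, EB. ring.
Qed.

Lemma frieze_spec_across (i j : nat) : glide V1 -> glide V2 ->
  frieze_spec V1 -> frieze_spec V2 -> (i < w < j)%nat -> (j < length V)%nat ->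
  1 <= fval V i j /\ (fval V i j = 1 <-> J (nthv V i) (nthv V j) = true).
Proof.
  intros G1 G2 F1 F2 Hij Hj. rewrite fval_across by auto.
  set (n2 := (length V2 - 1)%nat).
  assert (Ln2 : n2 = (n - w)%nat) by (unfold n2; rewrite length_V2; lia).
  assert (Ha : 1 <= fval V1 i w /\ (fval V1 i w = 1 <-> J (nthv V i) (nthv V w) = true)).
  { rewrite <- (nthv_firstn V (S w) i), <- (nthv_firstn V (S w) w) by lia.
    apply F1; rewrite length_V1; lia. }
  assert (Hb : 1 <= fval V2 0 (j - w) /\
               (fval V2 0 (j - w) = 1 <-> J (nthv V w) (nthv V j) = true)).
  { replace (nthv V w) with (nthv V2 0) by (rewrite nthv_skipn; f_equal; lia).
    replace (nthv V j) with (nthv V2 (j - w)) by (rewrite nthv_skipn; f_equal; lia).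
    apply F2; rewrite length_V2; lia. }
  assert (Hx := fvalz_nonneg V1 0 i F1 ltac:(rewrite length_V1; lia)).
  assert (Hy := fvalz_nonneg V2 (j - w) n2 F2 ltac:(unfold n2; lia)).
  split; [nia|]. split.
  - intros E1.
    assert (Z1 : fvalz V1 0 i = 0 /\ fvalz V2 (j - w) n2 = 0) by nia.
    destruct Z1 as [Z1 Z2].
    assert (i = 0)%nat.
    { destruct (Nat.eq_dec i 0); auto.
      pose proof (fvalz_pos V1 0 i F1 ltac:(rewrite length_V1; lia)). lia. }
    assert (j - w = n2)%nat.
    { destruct (Nat.eq_dec (j - w) n2); auto.
      pose proof (fvalz_pos V2 (j - w) n2 F2 ltac:(unfold n2; lia)). lia. }
    subst i. replace j with n by lia. apply HT.
  - intros Jij. destruct (straddle i j) as [-> ->]; auto.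
    rewrite (proj2 (proj2 Ha) J0w), (proj2 (proj2 Hb) Jwn).
    unfold fvalz. rewrite Nat.ltb_irrefl. replace (n - w)%nat with n2 by lia.
    rewrite Nat.ltb_irrefl. ring.
Qed.

Lemma frieze_apex_split : glide V1 -> glide V2 -> frieze_spec V1 -> frieze_spec V2 ->
  glide V /\ frieze_spec V.
Proof.
  intros G1 G2 F1 F2. split; [apply glide_apex_split; auto|].
  intros i j Hij.
  destruct (le_lt_dec j w) as [jw|wj].
  - rewrite fval_left, <- (nthv_firstn V (S w) i), <- (nthv_firstn V (S w) j) by lia.
    apply F1; rewrite length_V1; lia.
  - destruct (le_lt_dec w i) as [wi|iw].
    + rewrite fval_right by lia.
      replace (nthv V i) with (nthv V2 (i - w)) by (rewrite nthv_skipn; f_equal; lia).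
      replace (nthv V j) with (nthv V2 (j - w)) by (rewrite nthv_skipn; f_equal; lia).
      apply F2; rewrite length_V2; lia.
    + apply frieze_spec_across; auto; lia.
Qed.

End ApexSplit.

Lemma frieze_digon (V : list vtx) : tri_poly J V -> length V = 2%nat ->
  glide V /\ frieze_spec V.
Proof.
  intros HT E2. destruct V as [|x [|y [|z V]]]; simpl in E2; try lia.
  assert (C : forall v, v = x \/ v = y -> deg [x; y] v = 0).
  { intros v Hv; unfold deg; rewrite ntri_two; auto. }
  split.
  - intros X Y. unfold interior, seg, nthv; simpl.
    rewrite !C, !Z.add_0_r, mmul_1r by auto. reflexivity.
  - intros i j Hij. simpl in Hij. assert (i = 0%nat /\ j = 1%nat) as [-> ->] by lia.
    unfold fval, seg; simpl. split; [lia|]. split; intros; [|reflexivity].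
    destruct HT as (_ & _ & Hc & _). apply (Hc 0%nat); simpl; lia.
Qed.

(** The Conway-Coxeter theorem in matrix form, by induction on the number of
    vertices, cutting along the triangle on the base side. *)
Theorem conway_coxeter (V : list vtx) : tri_poly J V -> glide V /\ frieze_spec V.
Proof.
  remember (length V) as N eqn:HL. revert V HL.
  induction N as [N IH] using lt_wf_ind. intros V HL HT.
  destruct (Nat.eq_dec (length V) 2) as [E2|E3]; [apply frieze_digon; auto|].
  assert (H3 : (3 <= length V)%nat) by (destruct HT; lia).
  destruct (apex_exists V HT H3) as [w [Hw [J0w Jwn]]].
  assert (T1 : tri_poly J (firstn (S w) V)) by (apply tri_poly_firstn; auto; lia).
  assert (T2 : tri_poly J (skipn w V)) by (apply tri_poly_skipn; auto; lia).
  destruct (IH (S w) ltac:(lia) (firstn (S w) V) ltac:(rewrite firstn_length_le; lia) T1) as [G1 F1].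
  destruct (IH (length V - w)%nat ltac:(lia) (skipn w V) ltac:(rewrite length_skipn; lia) T2)
    as [G2 F2].
  apply (frieze_apex_split V w); auto; lia.
Qed.

End TriangulatedPolygon.

Lemma length_zrange (a b : Z) : length (zrange a b) = Z.to_nat (b - a + 1).
Proof. unfold zrange; rewrite length_map, length_seq; auto. Qed.

Lemma nth_map_seq {A : Type} (f : nat -> A) (s n t : nat) (d : A) : (t < n)%nat ->
  nth t (map f (seq s n)) d = f (s + t)%nat.
Proof.
  revert s t; induction n; intros s t H; [lia|].
  destruct t; simpl; [f_equal; lia|]. rewrite IHn by lia. f_equal; lia.
Qed.

Lemma nth_zrange (a b : Z) (t : nat) (d : Z) : (t < Z.to_nat (b - a + 1))%nat ->
  nth t (zrange a b) d = a + Z.of_nat t.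
Proof. intros. unfold zrange. rewrite nth_map_seq; auto. Qed.

Lemma In_zrange (a b x : Z) : In x (zrange a b) <-> a <= x <= b.
Proof.
  unfold zrange; rewrite in_map_iff. split.
  - intros [n [E Hn]]. apply in_seq in Hn. lia.
  - intros H. exists (Z.to_nat (x - a)). split; [lia|]. apply in_seq. lia.
Qed.

Lemma zrange_split (a b m : Z) : a <= m <= b ->
  zrange a b = zrange a (m - 1) ++ m :: zrange (m + 1) b.
Proof.
  intros H. unfold zrange.
  replace (Z.to_nat (b - a + 1))
    with (Z.to_nat (m - 1 - a + 1) + S (Z.to_nat (b - (m + 1) + 1)))%nat by lia.
  rewrite seq_app, map_app. f_equal. simpl. f_equal; [lia|].
  rewrite <- (Nat.add_0_r (S (Z.to_nat (m - 1 - a + 1)))), <- map_seq_shift.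
  apply map_ext. intros; lia.
Qed.

Lemma zrange_nil (a b : Z) : b < a -> zrange a b = [].
Proof. intros; unfold zrange. replace (Z.to_nat (b - a + 1)) with 0%nat by lia. auto. Qed.

Definition in_poly (p q r s : Z) (v : vtx) : Prop :=
  match v with U u => p <= u <= r | L x => s <= x <= q end.

Lemma In_strip (p q r s : Z) (v : vtx) : In v (strip_poly p q r s) <-> in_poly p q r s v.
Proof.
  destruct v as [u|x]; unfold strip_poly; rewrite in_app_iff, !in_map_iff; simpl; split.
  - intros [[y [E H]]|[y [E H]]]; try discriminate. injection E; intros; subst.
    apply In_zrange; auto.
  - intros H. left; exists u; split; auto; apply In_zrange; auto.
  - intros [[y [E H]]|[y [E H]]]; try discriminate. injection E; intros; subst.
    apply In_zrange; auto.
  - intros H. right; exists x; split; auto; apply In_zrange; auto.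
Qed.

Lemma incl_strip (p q r s p' q' r' s' : Z) : p <= p' -> r' <= r -> s <= s' -> q' <= q ->
  incl (strip_poly p' q' r' s') (strip_poly p q r s).
Proof. intros; intros v; rewrite !In_strip; destruct v; simpl; lia. Qed.

Section StripPolygon.

Variables p q r s : Z.
Hypothesis Hpr : p <= r.
Hypothesis Hsq : s <= q.

Local Notation P := (strip_poly p q r s).
Local Notation nU := (Z.to_nat (r - p + 1)).

Lemma length_strip : length P = (nU + Z.to_nat (q - s + 1))%nat.
Proof. unfold strip_poly; rewrite length_app, !length_map, !length_zrange; auto. Qed.

Lemma nthv_strip (t : nat) : (t < length P)%nat ->
  nthv P t = if (t <? nU)%nat then U (p + Z.of_nat t) else L (s + Z.of_nat (t - nU)).
Proof.
  rewrite length_strip. intros Ht. unfold nthv, strip_poly.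
  destruct (Nat.ltb_spec t nU).
  - rewrite app_nth1 by (rewrite length_map, length_zrange; auto).
    rewrite (map_nth U (zrange p r) 0), nth_zrange; auto.
  - rewrite app_nth2 by (rewrite length_map, length_zrange; auto).
    rewrite length_map, length_zrange.
    rewrite nth_indep with (d' := L 0) by (rewrite length_map, length_zrange; lia).
    rewrite (map_nth L (zrange s q) 0), nth_zrange; auto. lia.
Qed.

Lemma vlt_strip (t1 t2 : nat) : (t1 < t2 < length P)%nat ->
  vlt (nthv P t1) (nthv P t2) = true.
Proof.
  intros. rewrite !nthv_strip by lia.
  destruct (Nat.ltb_spec t1 nU), (Nat.ltb_spec t2 nU); simpl; auto;
  try (apply Z.ltb_lt; lia); lia.
Qed.

Lemma vlt_index (t1 t2 : nat) : (t1 < length P)%nat -> (t2 < length P)%nat ->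
  vlt (nthv P t1) (nthv P t2) = true -> (t1 < t2)%nat.
Proof.
  intros Ht1 Ht2 Vt. destruct (Nat.lt_trichotomy t1 t2) as [h|[h|h]]; auto; exfalso.
  - subst. rewrite vlt_irrefl in Vt; discriminate.
  - rewrite vlt_asym in Vt; [discriminate|]. apply vlt_strip; lia.
Qed.

Lemma NoDup_strip : NoDup P.
Proof.
  apply (NoDup_nth _ (U 0)). intros i j Hi Hj E.
  destruct (Nat.lt_trichotomy i j) as [h|[h|h]]; auto; exfalso.
  - pose proof (vlt_strip i j ltac:(lia)) as H. unfold nthv in H.
    rewrite E, vlt_irrefl in H. discriminate.
  - pose proof (vlt_strip j i ltac:(lia)) as H. unfold nthv in H.
    rewrite E, vlt_irrefl in H. discriminate.
Qed.

Lemma strip_index (v : vtx) : in_poly p q r s v -> exists t, (t < length P)%nat /\ nthv P t = v.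
Proof. intros. apply In_nthv, In_strip; auto. Qed.

End StripPolygon.

Definition boundary_adj (v w : vtx) : bool :=
  match v, w with
  | U a, U b => (b =? a + 1) || (a =? b + 1)
  | L a, L b => (b =? a + 1) || (a =? b + 1)
  | _, _ => false
  end.

Definition edge (T : arcset) (v w : vtx) : bool := joined_in T v w || boundary_adj v w.

Ltac zsimpl := repeat match goal with
  | H : context [?a <? ?b] |- _ => destruct (Z.ltb_spec a b)
  | |- context [?a <? ?b] => destruct (Z.ltb_spec a b)
  | H : context [?a =? ?b] |- _ => destruct (Z.eqb_spec a b)
  | |- context [?a =? ?b] => destruct (Z.eqb_spec a b)
  end.

Ltac vtx_case := repeat match goal with v : vtx |- _ => destruct v end.

Lemma arc_of_sym (v w : vtx) : arc_of v w = arc_of w v.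
Proof. destruct v, w; simpl; auto; zsimpl; auto; lia. Qed.

Lemma edge_sym (T : arcset) : symmetric (edge T).
Proof.
  intros a b. unfold edge, joined_in. rewrite arc_of_sym. f_equal.
  destruct a, b; simpl; auto; apply orb_comm.
Qed.

Lemma joined_arc (T : arcset) (v w : vtx) : joined_in T v w = true ->
  exists x, arc_of v w = Some x /\ T x = true.
Proof. unfold joined_in; destruct (arc_of v w) as [x|]; [exists x; auto|discriminate]. Qed.

Lemma prod_pos_iff (a b : Z) : a * b > 0 <-> (a > 0 /\ b > 0) \/ (a < 0 /\ b < 0).
Proof.
  split.
  - intros H. destruct (Z.lt_trichotomy a 0) as [h|[h|h]];
    destruct (Z.lt_trichotomy b 0) as [h'|[h'|h']]; subst; try lia; nia.
  - intros [[h1 h2]|[h1 h2]]; nia.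
Qed.

Lemma crosses_irrefl (x : arc) : ~ crosses x x.
Proof. destruct x; simpl; try lia. Qed.

Definition ends (x : arc) : vtx * vtx :=
  match x with Conn p q => (U p, L q) | Up a b => (U a, U b) | Low a b => (L a, L b) end.

Lemma arc_of_ends (x : arc) : valid_arc x -> arc_of (fst (ends x)) (snd (ends x)) = Some x.
Proof. destruct x; simpl; intros; auto; zsimpl; auto; lia. Qed.

Lemma interleave_crosses (v1 v2 v3 v4 : vtx) (x y : arc) :
  vlt v1 v2 = true -> vlt v2 v3 = true -> vlt v3 v4 = true ->
  arc_of v1 v3 = Some x -> arc_of v2 v4 = Some y -> crosses x y.
Proof.
  intros H1 H2 H3 E1 E2.
  vtx_case; simpl in *; try discriminate; zsimpl; try lia;
  injection E1; injection E2; intros; subst; simpl; rewrite ?prod_pos_iff; lia.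
Qed.

Lemma inside_cross (p q r s : Z) (v1 v2 : vtx) (x y : arc) :
  p <= r -> s <= q -> in_poly p q r s v1 -> in_poly p q r s v2 -> vlt v1 v2 = true ->
  arc_of v1 v2 = Some x -> valid_arc y -> crosses x y ->
  ~ crosses y (Conn p q) -> ~ crosses y (Conn r s) ->
  in_poly p q r s (fst (ends y)) /\ in_poly p q r s (snd (ends y)) /\
  ((vlt v1 (fst (ends y)) = true /\ vlt (fst (ends y)) v2 = true /\
    vlt v2 (snd (ends y)) = true) \/
   (vlt (fst (ends y)) v1 = true /\ vlt v1 (snd (ends y)) = true /\
    vlt (snd (ends y)) v2 = true)).
Proof.
  intros Hpr Hsq I1 I2 Lt E Vy C N1 N2.
  vtx_case; destruct y as [c d|c d|c d]; simpl in *; try discriminate; zsimpl; try lia;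
  injection E; intros; subst; simpl in *; rewrite ?prod_pos_iff in *; zsimpl; lia.
Qed.

Lemma boundary_adj_between (a b c : vtx) :
  vlt a b = true -> vlt b c = true -> boundary_adj a c = true -> False.
Proof.
  intros H1 H2 H3; vtx_case; simpl in *; try discriminate; zsimpl; simpl in *;
  try discriminate; lia.
Qed.

Lemma arc_eq_dec (x y : arc) : {x = y} + {x <> y}.
Proof. decide equality; apply Z.eq_dec. Qed.

Definition noncrossing (T : arcset) : Prop :=
  forall x y, T x = true -> T y = true -> ~ crosses x y.

Lemma noncrossing_of (T : arcset) : triangulation T -> noncrossing T.
Proof.
  intros [_ [H _]] x y Tx Ty C. destruct (arc_eq_dec x y) as [->|n].
  - apply (crosses_irrefl y C).
  - apply (H x y Tx Ty n C).
Qed.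

(** The two sides of a connecting arc (c1°, c2∘): geometrically to its left
    (c1 < u, x < c2) and to its right (u < c1, c2 < x). *)
Definition left_of_arc (c1 c2 : Z) (v : vtx) : Prop :=
  match v with U u => c1 < u | L x => x < c2 end.
Definition right_of_arc (c1 c2 : Z) (v : vtx) : Prop :=
  match v with U u => u < c1 | L x => c2 < x end.

Lemma arc_separates (T : arcset) (c1 c2 : Z) (y z : vtx) :
  noncrossing T -> T (Conn c1 c2) = true -> edge T y z = true ->
  ~ (left_of_arc c1 c2 y /\ right_of_arc c1 c2 z) /\
  ~ (left_of_arc c1 c2 z /\ right_of_arc c1 c2 y).
Proof.
  intros Hnc Tc Jyz.
  assert (Sep : forall y z, edge T y z = true -> left_of_arc c1 c2 y ->
                  right_of_arc c1 c2 z -> False).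
  { clear y z Jyz. intros y z J Hy Hz.
    apply orb_true_iff in J. destruct J as [J|J].
    - apply joined_arc in J. destruct J as [x [Ex Tx]].
      destruct z as [u|u]; simpl in Hz.
      + apply (Hnc x (Conn c1 c2)); auto.
        apply (interleave_crosses (U u) (U c1) y (L c2)); auto;
          [simpl; apply Z.ltb_lt; lia | destruct y; simpl in *; auto; apply Z.ltb_lt; lia
          | destruct y; simpl in *; auto; apply Z.ltb_lt; lia | rewrite arc_of_sym; auto].
      + apply (Hnc (Conn c1 c2) x); auto.
        apply (interleave_crosses (U c1) y (L c2) (L u)); auto;
          [destruct y; simpl in *; auto; apply Z.ltb_lt; lia
          | destruct y; simpl in *; auto; apply Z.ltb_lt; lia | simpl; apply Z.ltb_lt; lia].
    - vtx_case; simpl in *; try discriminate; zsimpl; simpl in *; try discriminate; lia. }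
  split; intros [A B]; [eapply Sep; eauto|].
  apply (Sep z y); auto. rewrite edge_sym; auto.
Qed.

Section StripTriangulated.

Variable T : arcset.
Hypothesis HT : triangulation T.
Variables p q r s : Z.
Hypothesis Hpr : p <= r.
Hypothesis Hsq : s <= q.
Hypothesis Tpq : T (Conn p q) = true.
Hypothesis Trs : T (Conn r s) = true.

Local Notation P := (strip_poly p q r s).
Local Notation nU := (Z.to_nat (r - p + 1)).

Lemma strip_sides (k : nat) : (S k < length P)%nat -> edge T (nthv P k) (nthv P (S k)) = true.
Proof.
  intros Hk. rewrite !nthv_strip by (auto; lia). pose proof (length_strip p q r s).
  unfold edge. apply orb_true_iff.
  destruct (Nat.ltb_spec k nU), (Nat.ltb_spec (S k) nU); try lia.
  - right. cbn [boundary_adj]. apply orb_true_iff; left. apply Z.eqb_eq; lia.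
  - left. replace (S k - nU)%nat with 0%nat by lia.
    replace (p + Z.of_nat k) with r by lia. rewrite Z.add_0_r.
    unfold joined_in; simpl. auto.
  - right. cbn [boundary_adj]. apply orb_true_iff; left. apply Z.eqb_eq; lia.
Qed.

Lemma strip_base : edge T (nthv P 0) (nthv P (length P - 1)) = true.
Proof.
  pose proof (length_strip p q r s).
  rewrite !nthv_strip by (auto; lia).
  destruct (Nat.ltb_spec 0 nU), (Nat.ltb_spec (length P - 1) nU); try lia.
  replace (p + Z.of_nat 0) with p by lia.
  replace (s + Z.of_nat (length P - 1 - nU)) with q by lia.
  unfold edge, joined_in; simpl. rewrite Tpq; auto.
Qed.

Lemma strip_noncrossing (a b c d : nat) : (a < b < c)%nat -> (c < d < length P)%nat ->
  edge T (nthv P a) (nthv P c) = true -> edge T (nthv P b) (nthv P d) = true -> False.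
Proof.
  intros Habc Hcd J1 J2.
  assert (V1 := vlt_strip p q r s Hpr Hsq a b ltac:(lia)).
  assert (V2 := vlt_strip p q r s Hpr Hsq b c ltac:(lia)).
  assert (V3 := vlt_strip p q r s Hpr Hsq c d ltac:(lia)).
  apply orb_true_iff in J1, J2.
  destruct J1 as [J1|J1]; [|exact (boundary_adj_between _ _ _ V1 V2 J1)].
  destruct J2 as [J2|J2]; [|exact (boundary_adj_between _ _ _ V2 V3 J2)].
  apply joined_arc in J1, J2. destruct J1 as [x [Ex Tx]], J2 as [y [Ey Ty]].
  apply (noncrossing_of T HT x y); auto.
  apply (interleave_crosses (nthv P a) (nthv P b) (nthv P c) (nthv P d)); auto.
Qed.

(** Maximality: a chord [v_a v_c] not in [T] is crossed by an arc of [T]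
    (maximality of [T]), which lies inside [P] since it cannot cross the two
    bounding arcs. *)
Lemma strip_maximal (a c : nat) : (a < c < length P)%nat -> edge T (nthv P a) (nthv P c) = false ->
  exists b d, (d < length P)%nat /\ (a < b < c)%nat /\ (d < a \/ c < d)%nat /\
              edge T (nthv P b) (nthv P d) = true.
Proof.
  intros Hac Jf. pose proof (noncrossing_of T HT) as Hnc.
  destruct HT as [Hval [_ [Hmax _]]].
  assert (Va : in_poly p q r s (nthv P a)) by (apply In_strip, nthv_In; lia).
  assert (Vc : in_poly p q r s (nthv P c)) by (apply In_strip, nthv_In; lia).
  assert (Lac := vlt_strip p q r s Hpr Hsq a c ltac:(lia)).
  apply orb_false_iff in Jf. destruct Jf as [Jf Af].
  set (va := nthv P a) in *. set (vc := nthv P c) in *.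
  assert (EX : exists x, arc_of va vc = Some x /\ valid_arc x).
  { clear - Lac Af. destruct va, vc; simpl in *; try discriminate; zsimpl; try lia;
    eexists; split; eauto; simpl; auto; lia. }
  destruct EX as [x [Ex Vx]].
  assert (Tx : T x = false) by (unfold joined_in in Jf; rewrite Ex in Jf; auto).
  destruct (Hmax x Vx Tx) as [y [Ty [Nxy Cxy]]].
  destruct (inside_cross p q r s va vc x y Hpr Hsq Va Vc Lac Ex (Hval y Ty) Cxy)
    as [I1 [I2 IL]]; try (apply Hnc; auto).
  destruct (strip_index p q r s _ I1) as [t1 [Ht1 E1]].
  destruct (strip_index p q r s _ I2) as [t2 [Ht2 E2]].
  assert (Jy : edge T (nthv P t1) (nthv P t2) = true).
  { unfold edge, joined_in. rewrite E1, E2, arc_of_ends, Ty; auto. }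
  assert (Idx : forall t t', (t < length P)%nat -> (t' < length P)%nat ->
                  vlt (nthv P t) (nthv P t') = true -> (t < t')%nat)
    by (intros t t' H1 H2 H3; apply (vlt_index p q r s Hpr Hsq); auto).
  rewrite <- E1, <- E2 in IL.
  destruct IL as [[A1 [A2 A3]]|[A1 [A2 A3]]]; apply Idx in A1, A2, A3; try lia.
  - exists t1, t2. repeat split; auto; lia.
  - exists t2, t1. repeat split; auto; try lia. rewrite edge_sym; auto.
Qed.

Lemma tri_poly_strip : tri_poly (edge T) P.
Proof.
  pose proof (length_strip p q r s).
  unfold tri_poly. repeat split.
  - lia.
  - apply NoDup_strip; auto.
  - apply strip_sides.
  - apply strip_base.
  - apply strip_noncrossing.
  - apply strip_maximal.
Qed.

End StripTriangulated.

(** Friese numbers as matrix entries.  The recursion [frz] computes the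
    entries of the products [M(a_l) ... M(a_(k+1))]. *)
Lemma frz_mprod (a : nat -> Z) (g : vtx -> Z) (V : list vtx) (k d : nat) :
  (forall x, (x < length V)%nat -> a x = g (nthv V x)) -> (k + d < length V)%nat ->
  frz (length V) a k d =
    (m10 (mprod g (seg V (S k) (S k + d))), m00 (mprod g (seg V (S k) (S k + d)))).
Proof.
  intros Ha. induction d; intros Hd.
  - simpl. rewrite Nat.add_0_r, seg_empty. reflexivity.
  - simpl frz. rewrite IHd by lia.
    replace (S k + S d)%nat with (S (S k + d)) by lia. rewrite seg_last by lia.
    rewrite mprod_app. simpl mprod. rewrite mmul_1l, Nat.mod_small, Ha by lia.
    replace (k + d + 1)%nat with (S k + d)%nat by lia.
    mat_simpl. f_equal; ring.
Qed.

Lemma map_nthv_seq (V : list vtx) : map (nthv V) (seq 0 (length V)) = V.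
Proof.
  apply (nth_ext _ _ (U 0) (U 0)).
  - rewrite length_map, length_seq; auto.
  - intros n Hn. rewrite length_map, length_seq in Hn. rewrite nth_map_seq by auto. auto.
Qed.

Lemma list_prod_map {A B : Type} (f : A -> B) (l : list A) :
  list_prod (map f l) (map f l) = map (fun ab => (f (fst ab), f (snd ab))) (list_prod l l).
Proof.
  generalize l at 2 4. intros l2. induction l; simpl; auto.
  rewrite IHl, map_app, !map_map. reflexivity.
Qed.

Lemma length_filter_map {A B : Type} (g : B -> bool) (h : A -> B) (l : list A) :
  length (filter g (map h l)) = length (filter (fun x => g (h x)) l).
Proof. induction l; simpl; auto. destruct (g (h a)); simpl; auto. Qed.

Section StripFriese.

Variable T : arcset.
Hypothesis HT : triangulation T.
Variables p q r s : Z.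
Hypothesis Hpr : p <= r.
Hypothesis Hsq : s <= q.
Hypothesis Tpq : T (Conn p q) = true.
Hypothesis Trs : T (Conn r s) = true.

Local Notation P := (strip_poly p q r s).

Lemma boundary_adj_index (k l : nat) : (k < length P)%nat -> (l < length P)%nat ->
  boundary_adj (nthv P k) (nthv P l) = true -> l = S k \/ k = S l.
Proof.
  intros Hk Hl A. rewrite !nthv_strip in A by auto. pose proof (length_strip p q r s).
  destruct (Nat.ltb_spec k (Z.to_nat (r - p + 1))), (Nat.ltb_spec l (Z.to_nat (r - p + 1)));
  cbn [boundary_adj] in A; try discriminate; apply orb_true_iff in A; rewrite !Z.eqb_eq in A; lia.
Qed.

Lemma poly_E_edge (k l : nat) : (k < length P)%nat -> (l < length P)%nat ->
  poly_E T P k l = edge T (nthv P k) (nthv P l).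
Proof.
  intros Hk Hl.
  pose proof (tri_poly_strip T HT p q r s Hpr Hsq Tpq Trs) as [_ [_ [Hc [H0n _]]]].
  set (N := length P) in *.
  assert (ES := edge_sym T).
  unfold poly_E. fold N. fold (nthv P k). fold (nthv P l).
  assert (Next : forall x y, (y = (x + 1) mod N)%nat -> (x < N)%nat ->
                   edge T (nthv P x) (nthv P y) = true).
  { intros x y E Hx. destruct (Nat.eq_dec (S x) N) as [e|ne].
    - replace (x + 1)%nat with N in E by lia. rewrite Nat.Div0.mod_same in E. subst y.
      rewrite ES. replace x with (N - 1)%nat by lia. auto.
    - rewrite Nat.mod_small in E by lia. subst y. rewrite Nat.add_1_r. apply Hc. lia. }
  destruct (Nat.eqb_spec l ((k + 1) mod N)) as [e|ne].
  - simpl. symmetry. apply Next; auto.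
  - destruct (Nat.eqb_spec k ((l + 1) mod N)) as [e'|ne'].
    + simpl. symmetry. rewrite ES. apply Next; auto.
    + simpl. unfold edge. destruct (boundary_adj (nthv P k) (nthv P l)) eqn:A;
        [|rewrite orb_false_r; auto].
      exfalso. apply boundary_adj_index in A; auto. destruct A as [A|A]; subst.
      * apply ne. rewrite Nat.mod_small; lia.
      * apply ne'. rewrite Nat.mod_small; lia.
Qed.

Lemma tri_count_strip (t : nat) : (t < length P)%nat ->
  tri_count (length P) (poly_E T P) t = ntri (edge T) P (nthv P t).
Proof.
  intros Ht. assert (HN := NoDup_strip p q r s Hpr Hsq).
  set (N := length P) in *.
  unfold tri_count, ntri. rewrite <- (map_nthv_seq P) at 2 3. fold N.
  rewrite list_prod_map, length_filter_map. f_equal.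
  apply filter_ext_in. intros [y z] Hyz. apply in_prod_iff in Hyz.
  destruct Hyz as [Hy Hz]. apply in_seq in Hy, Hz. simpl.
  assert (Eq : forall a, (a < N)%nat -> negb (Nat.eqb a t) = negb (veqb (nthv P a) (nthv P t))).
  { intros a Ha. f_equal. destruct (Nat.eqb_spec a t), (veqb (nthv P a) (nthv P t)) eqn:E; auto.
    - subst. rewrite veqb_false in E. tauto.
    - apply veqb_spec in E. apply nthv_inj in E; auto; lia. }
  unfold tri_at. rewrite !poly_E_edge, !Eq by lia.
  do 5 f_equal.
  destruct (Nat.ltb_spec y z).
  - symmetry. apply vlt_strip; auto; lia.
  - destruct (vlt (nthv P y) (nthv P z)) eqn:V; auto.
    apply (vlt_index p q r s Hpr Hsq) in V; lia.
Qed.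

End StripFriese.

Definition path_between (i j r s : Z) : list vtx :=
  map U (zrange (i + 1) r) ++ map L (zrange s (j - 1)).

Lemma In_path (i j r s : Z) (v : vtx) : In v (path_between i j r s) <->
  match v with U u => i + 1 <= u <= r | L x => s <= x <= j - 1 end.
Proof.
  unfold path_between. rewrite in_app_iff, !in_map_iff. destruct v as [u|x]; split.
  - intros [[y [E H]]|[y [E H]]]; try discriminate. injection E; intros; subst.
    apply In_zrange; auto.
  - intros H; left; exists u; split; auto; apply In_zrange; auto.
  - intros [[y [E H]]|[y [E H]]]; try discriminate. injection E; intros; subst.
    apply In_zrange; auto.
  - intros H; right; exists x; split; auto; apply In_zrange; auto.
Qed.

Lemma seg_strip_path (p q r s i j : Z) : p <= i <= r -> s <= j <= q ->
  seg (strip_poly p q r s) (S (Z.to_nat (i - p))) (Z.to_nat (r - p + 1 + (j - s)))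
  = path_between i j r s.
Proof.
  intros Hi Hj.
  set (P := strip_poly p q r s). set (nU := Z.to_nat (r - p + 1)).
  rewrite (seg_app P _ nU) by lia. unfold path_between. f_equal.
  - unfold seg, zrange. rewrite map_map.
    replace (nU - S (Z.to_nat (i - p)))%nat with (Z.to_nat (r - (i + 1) + 1)) by lia.
    rewrite <- (Nat.add_0_r (S (Z.to_nat (i - p)))), <- map_seq_shift.
    apply map_ext_seq. intros k Hk. unfold P. rewrite nthv_strip by (rewrite ?length_strip; lia).
    fold nU. destruct (Nat.ltb_spec (S (Z.to_nat (i - p)) + k) nU); [|lia]. f_equal. lia.
  - unfold seg, zrange. rewrite map_map.
    replace (Z.to_nat (r - p + 1 + (j - s)) - nU)%nat with (Z.to_nat (j - 1 - s + 1)) by lia.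
    rewrite <- (Nat.add_0_r nU), <- map_seq_shift.
    apply map_ext_seq. intros k Hk. unfold P. rewrite nthv_strip by (rewrite ?length_strip; lia).
    fold nU. destruct (Nat.ltb_spec (nU + k) nU); [lia|]. f_equal. lia.
Qed.

Lemma Phi_fval (T : arcset) (p q r s i j : Z) : triangulation T -> admissible T p q r s i j ->
  Phi_val T p q r s i j =
  fval (edge T) (strip_poly p q r s) (Z.to_nat (i - p)) (Z.to_nat (r - p + 1 + (j - s))).
Proof.
  intros HT [T1 [T2 [Hi Hj]]].
  assert (Len := length_strip p q r s).
  set (P := strip_poly p q r s) in *.
  set (k := Z.to_nat (i - p)). set (l := Z.to_nat (r - p + 1 + (j - s))).
  unfold Phi_val, friese. fold P k l.
  replace ((l + length P - k) mod length P)%nat with (l - k)%nat.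
  2: { replace (l + length P - k)%nat with ((l - k) + 1 * length P)%nat by lia.
       rewrite Nat.Div0.mod_add, Nat.mod_small; lia. }
  rewrite (frz_mprod _ (deg (edge T) P)).
  - simpl. replace (k + (l - k))%nat with l by lia. rewrite seg_last by lia.
    rewrite mprod_app. simpl mprod. rewrite mmul_1l. unfold fval. mat_simpl. ring.
  - intros x Hx. unfold deg, P. rewrite tri_count_strip; auto; lia.
  - lia.
Qed.

Lemma Phi_path (T : arcset) (p q r s i j : Z) : triangulation T -> admissible T p q r s i j ->
  Phi_val T p q r s i j = m00 (mprod (deg (edge T) (strip_poly p q r s)) (path_between i j r s)).
Proof.
  intros HT Ha. rewrite Phi_fval by auto. unfold fval.
  destruct Ha as [_ [_ [Hi Hj]]]. rewrite seg_strip_path; auto; lia.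
Qed.

Lemma deg_restrict (J : vtx -> vtx -> bool) (V W : list vtx) (v : vtx) :
  NoDup V -> NoDup W -> incl W V -> (forall y, In y V -> J v y = true -> In y W) ->
  deg J V v = deg J W v.
Proof.
  intros HV HW I Hn. unfold deg. f_equal. apply ntri_restrict; auto.
  intros y z Hy Hz Ht. apply tri_at_spec in Ht. destruct Ht as (_ & _ & _ & Jy & Jz & _).
  split; apply Hn; auto.
Qed.

Lemma conn_nested (T : arcset) (p q p' q' : Z) : noncrossing T ->
  T (Conn p q) = true -> T (Conn p' q') = true ->
  (p <= p' /\ q' <= q) \/ (p' <= p /\ q <= q').
Proof.
  intros Hnc T1 T2. pose proof (Hnc _ _ T1 T2) as NC. simpl in NC.
  rewrite prod_pos_iff in NC. lia.
Qed.

Section StripCut.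

(** A connecting arc (c1°, c2∘) of [T] cuts the strip polygon [P] bounded by
    (p°, q∘) and (r°, s∘) into [PL] (on the side of p°) and [PR] (on the side
    of r°). *)
Variable T : arcset.
Hypothesis HT : triangulation T.
Variables p q r s c1 c2 : Z.
Hypothesis Tc : T (Conn c1 c2) = true.
Hypothesis Hc1 : p <= c1 <= r.
Hypothesis Hc2 : s <= c2 <= q.

Local Notation P := (strip_poly p q r s).
Local Notation PL := (strip_poly p q c1 c2).
Local Notation PR := (strip_poly c1 c2 r s).

Lemma deg_cut_left (v : vtx) : in_poly p q c1 c2 v -> right_of_arc c1 c2 v ->
  deg (edge T) P v = deg (edge T) PL v.
Proof.
  intros Iv Rv. apply deg_restrict; try apply NoDup_strip; try lia.
  - apply incl_strip; lia.
  - intros y Hy Jy. destruct (arc_separates T c1 c2 v y (noncrossing_of T HT) Tc Jy) as [_ A].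
    rewrite In_strip in *. destruct v, y; simpl in *; lia.
Qed.

Lemma deg_cut_right (v : vtx) : in_poly c1 c2 r s v -> left_of_arc c1 c2 v ->
  deg (edge T) P v = deg (edge T) PR v.
Proof.
  intros Iv Lv. apply deg_restrict; try apply NoDup_strip; try lia.
  - apply incl_strip; lia.
  - intros y Hy Jy. destruct (arc_separates T c1 c2 v y (noncrossing_of T HT) Tc Jy) as [A _].
    rewrite In_strip in *. destruct v, y; simpl in *; lia.
Qed.

Lemma deg_cut_corner (v : vtx) : v = U c1 \/ v = L c2 ->
  deg (edge T) P v = deg (edge T) PL v + deg (edge T) PR v.
Proof.
  intros Hv. unfold deg. rewrite <- Nat2Z.inj_add. f_equal.
  apply ntri_split2; try apply NoDup_strip; try lia; try (apply incl_strip; lia).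
  - intros y z Hy Hz Ht. apply tri_at_spec in Ht. destruct Ht as (_ & _ & _ & _ & _ & Jyz).
    destruct (arc_separates T c1 c2 y z (noncrossing_of T HT) Tc Jyz) as [A1 A2].
    rewrite !In_strip in *. destruct y, z; simpl in *; lia.
  - intros y z Ht Hy Hz Hy' Hz'. apply tri_at_spec in Ht. destruct Ht as (Lyz & Ny & Nz & _).
    rewrite !In_strip in *.
    destruct Hv; subst v; destruct y, z; simpl in *; try lia; zsimpl; try discriminate;
    try (apply Ny; f_equal; lia); try (apply Nz; f_equal; lia).
Qed.

Lemma glide_cut_right (X Y : Z) : T (Conn r s) = true ->
  mmul (mmul (fmat (X + deg (edge T) PR (L c2))) (mprod (deg (edge T) PR) (path_between c1 c2 r s)))
       (fmat (Y + deg (edge T) PR (U c1))) = mmul (fmat X) (fmat Y).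
Proof.
  intros Trs.
  assert (TQ : tri_poly (edge T) PR) by (apply tri_poly_strip; auto; lia).
  destruct (conway_coxeter (edge T) (edge_sym T) PR TQ) as [G _].
  assert (LQ := length_strip c1 c2 r s).
  assert (First : nthv PR 0 = U c1).
  { rewrite nthv_strip by lia. destruct (Nat.ltb_spec 0 (Z.to_nat (r - c1 + 1))); [|lia].
    f_equal; lia. }
  assert (Last : nthv PR (length PR - 1) = L c2).
  { rewrite nthv_strip by lia.
    destruct (Nat.ltb_spec (length PR - 1) (Z.to_nat (r - c1 + 1))); [lia|]. f_equal; lia. }
  assert (Int : interior PR = path_between c1 c2 r s).
  { unfold interior. rewrite <- (seg_strip_path c1 c2 r s c1 c2) by lia.
    replace (S (Z.to_nat (c1 - c1))) with 1%nat by lia. f_equal. lia. }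
  pose proof (G X Y) as GXY. rewrite First, Last, Int in GXY. exact GXY.
Qed.

End StripCut.

Lemma Phi_cut_left (T : arcset) (p q r s p1 q1 i j : Z) : triangulation T ->
  admissible T p q r s i j -> T (Conn p1 q1) = true -> p <= p1 < i -> j < q1 <= q ->
  Phi_val T p q r s i j = Phi_val T p1 q1 r s i j.
Proof.
  intros HT Ha T1 H1 H2. pose proof Ha as [Tpq [Trs [Hi Hj]]].
  assert (Ha' : admissible T p1 q1 r s i j) by (repeat split; auto; lia).
  rewrite !Phi_path by auto. f_equal. apply mprod_ext. intros v Hv.
  apply In_path in Hv.
  apply (deg_cut_right T HT p q r s p1 q1); auto; try lia; destruct v; simpl in *; lia.
Qed.

(** Cutting on the side of r° along an arc (r1°, s1∘): the part of the path
    inside the cut-off polygon collapses by its glide identity. *)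
Lemma Phi_cut_right (T : arcset) (p q r s r1 s1 i j : Z) : triangulation T ->
  admissible T p q r s i j -> T (Conn r1 s1) = true -> i < r1 <= r -> s <= s1 < j ->
  Phi_val T p q r s i j = Phi_val T p q r1 s1 i j.
Proof.
  intros HT Ha T1 H1 H2. pose proof Ha as [Tpq [Trs [Hi Hj]]].
  assert (Ha' : admissible T p q r1 s1 i j) by (repeat split; auto; lia).
  rewrite !Phi_path by auto.
  set (A := map U (zrange (i + 1) (r1 - 1))). set (B := map L (zrange (s1 + 1) (j - 1))).
  set (QI := path_between r1 s1 r s).
  assert (E1 : path_between i j r s = A ++ U r1 :: (QI ++ L s1 :: B)).
  { unfold QI, A, B, path_between.
    rewrite (zrange_split (i + 1) r r1), (zrange_split s (j - 1) s1) by lia.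
    rewrite !map_app. simpl. rewrite <- !app_assoc. reflexivity. }
  assert (E2 : path_between i j r1 s1 = A ++ U r1 :: L s1 :: B).
  { unfold path_between, A, B.
    rewrite (zrange_split (i + 1) r1 r1), (zrange_split s1 (j - 1) s1) by lia.
    rewrite (zrange_nil (r1 + 1) r1), (zrange_nil s1 (s1 - 1)) by lia.
    rewrite !map_app. simpl. rewrite <- !app_assoc. reflexivity. }
  set (cP := deg (edge T) (strip_poly p q r s)).
  set (cL := deg (edge T) (strip_poly p q r1 s1)).
  set (cR := deg (edge T) (strip_poly r1 s1 r s)).
  assert (Outer : forall l, (forall v, In v l -> in_poly p q r1 s1 v /\ right_of_arc r1 s1 v) ->
                    mprod cP l = mprod cL l).
  { intros l Hl. apply mprod_ext. intros v Hv. destruct (Hl v Hv).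
    apply (deg_cut_left T HT p q r s r1 s1); auto; lia. }
  assert (Inner : mprod cP QI = mprod cR QI).
  { apply mprod_ext. intros v Hv. apply In_path in Hv.
    apply (deg_cut_right T HT p q r s r1 s1); auto; try lia; destruct v; simpl in *; lia. }
  assert (Corner : forall v, v = U r1 \/ v = L s1 -> cP v = cL v + cR v)
    by (intros; apply (deg_cut_corner T HT p q r s r1 s1); auto; lia).
  rewrite E1, E2, !mprod_app. cbn [mprod]. rewrite !mprod_app. cbn [mprod].
  rewrite (Outer A), (Outer B), Inner, !Corner by
    (auto; intros v Hv; apply in_map_iff in Hv; destruct Hv as [u [<- Hu]];
     apply In_zrange in Hu; simpl; lia).
  rewrite <- (mmul_assoc (mprod cL B) (fmat _) (mprod cR QI)),
          <- (mmul_assoc (mprod cL B) _ (fmat _)).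
  pose proof (glide_cut_right T HT p q r s r1 s1 T1 ltac:(lia) ltac:(lia)) as G.
  fold cR QI in G. rewrite G, !mmul_assoc by auto. reflexivity.
Qed.

(** Independence of the choice of arcs: cut both choices down to the innermost
    arcs on each side (the connecting arcs of [T] are nested). *)
Lemma Phi_indep (T : arcset) (p q r s p' q' r' s' i j : Z) : triangulation T ->
  admissible T p q r s i j -> admissible T p' q' r' s' i j ->
  Phi_val T p q r s i j = Phi_val T p' q' r' s' i j.
Proof.
  intros HT Ha Hb. pose proof (noncrossing_of T HT) as Hnc.
  pose proof Ha as [Tpq [Trs [Hi Hj]]]. pose proof Hb as [Tpq' [Trs' [Hi' Hj']]].
  assert (Left : Phi_val T p q r s i j = Phi_val T p' q' r s i j).
  { assert (Hc : admissible T p' q' r s i j) by (repeat split; auto; lia).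
    destruct (conn_nested T p q p' q' Hnc Tpq Tpq');
      [apply Phi_cut_left | symmetry; apply Phi_cut_left]; auto; lia. }
  assert (Right : Phi_val T p' q' r s i j = Phi_val T p' q' r' s' i j).
  { assert (Hc : admissible T p' q' r s i j) by (repeat split; auto; lia).
    destruct (conn_nested T r s r' s' Hnc Trs Trs');
      [symmetry; apply Phi_cut_right | apply Phi_cut_right]; auto; lia. }
  congruence.
Qed.

Lemma admissible_exists (T : arcset) (i j : Z) : triangulation T ->
  exists p q r s, admissible T p q r s i j.
Proof.
  intros [_ [_ [_ H]]]. destruct (H i j) as [[p [q [T1 [H1 H2]]]] [r [s [T2 [H3 H4]]]]].
  exists p, q, r, s. repeat split; auto; lia.
Qed.

Lemma Phi_frieze (T : arcset) (p q r s i j : Z) : triangulation T -> admissible T p q r s i j ->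
  1 <= Phi_val T p q r s i j /\ (Phi_val T p q r s i j = 1 <-> T (Conn i j) = true).
Proof.
  intros HT Ha. pose proof Ha as [T1 [T2 [Hi Hj]]].
  rewrite Phi_fval by auto.
  assert (TP : tri_poly (edge T) (strip_poly p q r s)) by (apply tri_poly_strip; auto; lia).
  destruct (conway_coxeter (edge T) (edge_sym T) _ TP) as [_ FS].
  assert (Len := length_strip p q r s).
  destruct (FS (Z.to_nat (i - p)) (Z.to_nat (r - p + 1 + (j - s))) ltac:(lia)) as [A B].
  split; auto. rewrite B, !nthv_strip by lia.
  destruct (Nat.ltb_spec (Z.to_nat (i - p)) (Z.to_nat (r - p + 1))); [|lia].
  destruct (Nat.ltb_spec (Z.to_nat (r - p + 1 + (j - s))) (Z.to_nat (r - p + 1))); [lia|].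
  replace (p + Z.of_nat (Z.to_nat (i - p))) with i by lia.
  replace (s + Z.of_nat (Z.to_nat (r - p + 1 + (j - s)) - Z.to_nat (r - p + 1))) with j by lia.
  unfold edge; simpl. rewrite orb_false_r. tauto.
Qed.

(** The SL2 relation: the four entries come from one polygon containing the
    2x2 square, and are entries of [M], [M(x) M], [M M(y)], [M(x) M M(y)]. *)
Lemma Phi_SL2 (T : arcset) (p q r s i j : Z) : triangulation T ->
  T (Conn p q) = true -> T (Conn r s) = true -> p < i -> i + 1 < r -> s < j -> j + 1 < q ->
  Phi_val T p q r s i j * Phi_val T p q r s (i + 1) (j + 1)
  - Phi_val T p q r s i (j + 1) * Phi_val T p q r s (i + 1) j = 1.
Proof.
  intros HT T1 T2 H1 H2 H3 H4.
  rewrite !Phi_fval by (auto; repeat split; auto; lia).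
  assert (Len := length_strip p q r s).
  set (P := strip_poly p q r s) in *.
  set (k := Z.to_nat (i - p)). set (l := Z.to_nat (r - p + 1 + (j - s))).
  replace (Z.to_nat (i + 1 - p)) with (S k) by lia.
  replace (Z.to_nat (r - p + 1 + (j + 1 - s))) with (S l) by lia.
  unfold fval. set (c := deg (edge T) P).
  assert (E1 : seg P (S k) l = nthv P (S k) :: seg P (S (S k)) l)
    by (rewrite (seg_split P (S k) (S k) l), seg_empty by lia; reflexivity).
  assert (E2 : seg P (S k) (S l) = nthv P (S k) :: seg P (S (S k)) (S l))
    by (rewrite (seg_split P (S k) (S k) (S l)), seg_empty by lia; reflexivity).
  rewrite E1, E2, seg_last by lia. cbn [mprod]. rewrite !mprod_app. cbn [mprod].
  rewrite !mmul_1l. apply entry_minor, det_mprod.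
Qed.

Definition admissible_quad (T : arcset) (i j : Z) (z : Z * Z * Z * Z) : Prop :=
  let '(p, q, r, s) := z in admissible T p q r s i j.

Lemma admissible_quad_exists (T : arcset) (i j : Z) : triangulation T ->
  exists z, admissible_quad T i j z.
Proof.
  intros HT. destruct (admissible_exists T i j HT) as [p [q [r [s Ha]]]].
  exists (p, q, r, s); exact Ha.
Qed.

Definition Phi (T : arcset) (HT : triangulation T) (i j : Z) : Z :=
  let '(p, q, r, s) :=
    proj1_sig (constructive_indefinite_description _ (admissible_quad_exists T i j HT)) in
  Phi_val T p q r s i j.

Section PhiTiling.

Variable T : arcset.
Hypothesis HT : triangulation T.

Lemma Phi_eq (p q r s i j : Z) : admissible T p q r s i j -> Phi T HT i j = Phi_val T p q r s i j.
Proof.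
  intros Ha. unfold Phi.
  destruct (constructive_indefinite_description _ _) as [[[[p' q'] r'] s'] Hb]; simpl.
  apply Phi_indep; auto.
Qed.

Lemma Phi_ones (i j : Z) : 1 <= Phi T HT i j /\ (Phi T HT i j = 1 <-> T (Conn i j) = true).
Proof.
  destruct (admissible_exists T i j HT) as [p [q [r [s Ha]]]].
  rewrite (Phi_eq p q r s) by auto. apply Phi_frieze; auto.
Qed.

Lemma Phi_SL2_tiling : SL2_tiling (Phi T HT).
Proof.
  split; [intros i j; apply Phi_ones|]. intros i j.
  pose proof HT as [_ [_ [_ H]]].
  destruct (H i (j + 1)) as [[p [q [T1 [H1 H2]]]] _].
  destruct (H (i + 1) j) as [_ [r [s [T2 [H3 H4]]]]].
  rewrite (Phi_eq p q r s i j), (Phi_eq p q r s (i + 1) (j + 1)), (Phi_eq p q r s i (j + 1)),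
          (Phi_eq p q r s (i + 1) j) by (repeat split; auto; lia).
  apply Phi_SL2; auto; lia.
Qed.

(** The arcs of [T] in the admissibility condition are ones of the tiling. *)
Lemma Phi_enough_ones : enough_ones (Phi T HT).
Proof.
  intros i j. pose proof HT as [_ [_ [_ H]]].
  destruct (H i j) as [[p [q [T1 [H1 H2]]]] [r [s [T2 [H3 H4]]]]].
  split; [exists p, q | exists r, s]; repeat split; auto; apply Phi_ones; auto.
Qed.

End PhiTiling.

Theorem proposition4p3 (T : arcset) (HT : triangulation T) :
  (forall i j : Z, exists p q r s, admissible T p q r s i j) /\
  exists t : Z -> Z -> Z,
    (forall i j p q r s, admissible T p q r s i j -> t i j = Phi_val T p q r s i j) /\
    SL2_tiling t /\ enough_ones t /\
    (forall i j : Z, t i j = 1 <-> T (Conn i j) = true).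
Proof.
  split; [intros i j; apply admissible_exists; auto|].
  exists (Phi T HT). split; [|split; [|split]].
  - intros i j p q r s Ha. apply Phi_eq; auto.
  - apply Phi_SL2_tiling.
  - apply Phi_enough_ones.
  - intros i j. apply Phi_ones.
Qed.
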